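(* For $\beta,k,m\in\mathbb{N}$ and $\operatorname{Re}(s)>1$, $$\sum_{n=1}^\infty\frac{\Lambda^{(\beta)}_{k,m}(n)}{n^s}=(-1)^k\sigma^{(\beta)}_{1-s/\beta}(m)\frac{\zeta^{(k)}(s)}{\zeta(s)},$$ the series converging absolutely, where $\zeta^{(k)}$ is the $k$-th derivative of the Riemann zeta-function.
   Context: For $\beta,q,m\in\mathbb{N}$, $c_q^{(\beta)}(m)=\sum e^{2\pi i mh/q^\beta}$, the sum over integers $0\le h<q^\beta$ such that $h$ and $q^\beta$ have no common divisor of the form $d^\beta$ with $d>1$. For $z\in\mathbb{C}$, $\sigma_z^{(\beta)}(m)=\sum_{d\in\mathbb{N},\ d^\beta\mid m}d^{\beta z}$. The generalized von Mangoldt function is $\Lambda^{(\beta)}_{k,m}(n)=\sum_{d\delta=n}c_d^{(\beta)}(m)\log^k\delta$ (so $\Lambda^{(1)}_{1,1}=\Lambda$). *)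

From Stdlib Require Import Reals Lra Lia Arith List ClassicalEpsilon.
Import ListNotations.
Open Scope R_scope.

Definition Cx : Type := (R * R)%type.
Definition Re (z : Cx) : R := fst z.
Definition Im (z : Cx) : R := snd z.
Definition RtoC (r : R) : Cx := (r, 0).
Definition Cx0 : Cx := (0, 0).
Definition Cx1 : Cx := (1, 0).
Definition Cadd (z w : Cx) : Cx := (fst z + fst w, snd z + snd w).
Definition Copp (z : Cx) : Cx := (- fst z, - snd z).
Definition Csub (z w : Cx) : Cx := Cadd z (Copp w).
Definition Cmul (z w : Cx) : Cx :=
  (fst z * fst w - snd z * snd w, fst z * snd w + snd z * fst w).
Definition Cinv (z : Cx) : Cx :=
  let d := fst z * fst z + snd z * snd z in (fst z / d, - snd z / d).
Definition Cdiv (z w : Cx) : Cx := Cmul z (Cinv w).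
Definition Cnorm (z : Cx) : R := sqrt (fst z * fst z + snd z * snd z).
Definition Cexp (z : Cx) : Cx := (exp (fst z) * cos (snd z), exp (fst z) * sin (snd z)).
Definition Cpow_pos (a : R) (z : Cx) : Cx := Cexp (Cmul (RtoC (ln a)) z).

Definition Csum_list (l : list Cx) : Cx := fold_right Cadd Cx0 l.

Fixpoint Cpartial (f : nat -> Cx) (N : nat) : Cx :=
  match N with
  | O => f O
  | S N' => Cadd (Cpartial f N') (f N)
  end.
Definition Cseries_conv (f : nat -> Cx) (l : Cx) : Prop :=
  forall eps : R, eps > 0 -> exists N : nat, forall n : nat, (n >= N)%nat ->
    Cnorm (Csub (Cpartial f n) l) < eps.
Definition Cseries_abs_conv (f : nat -> Cx) : Prop :=
  exists l : R, Un_cv (fun N => sum_f_R0 (fun i => Cnorm (f i)) N) l.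

Definition C_inhabited : inhabited Cx := inhabits Cx0.

(** The sum of a series (a chosen limit; meaningful when it converges). *)
Definition Cseries_sum (f : nat -> Cx) : Cx := epsilon C_inhabited (Cseries_conv f).

(** Riemann zeta function, defined on Re s > 1 by sum_{n>=1} n^{-s}. *)
Definition zeta (s : Cx) : Cx :=
  Cseries_sum (fun i => Cinv (Cpow_pos (INR (S i)) s)).

Definition Cderivable_lim (f : Cx -> Cx) (z l : Cx) : Prop :=
  forall eps : R, eps > 0 -> exists delta : R, delta > 0 /\
    forall h : Cx, h <> Cx0 -> Cnorm h < delta ->
      Cnorm (Csub (Cdiv (Csub (f (Cadd z h)) (f z)) h) l) < eps.
Definition Cderiv (f : Cx -> Cx) (z : Cx) : Cx :=
  epsilon C_inhabited (Cderivable_lim f z).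
Fixpoint Cderiv_n (k : nat) (f : Cx -> Cx) : Cx -> Cx :=
  match k with
  | O => f
  | S k' => Cderiv (Cderiv_n k' f)
  end.

Definition beta_coprime (beta h N : nat) : Prop :=
  forall d : nat, (1 < d)%nat ->
    ~ (Nat.divide (Nat.pow d beta) h /\ Nat.divide (Nat.pow d beta) N).

Definition ramanujan_beta (beta q m : nat) : Cx :=
  let Q := Nat.pow q beta in
  Csum_list (map (fun h =>
     if excluded_middle_informative (beta_coprime beta h Q)
     then Cexp (0, 2 * PI * INR m * INR h / INR Q)
     else Cx0) (seq 0 Q)).

(** sigma_z^{(beta)}(m) = sum_{d in N, d^beta | m} d^{beta z}  (m >= 1, so d <= m) *)
Definition sigma_beta (beta : nat) (z : Cx) (m : nat) : Cx :=
  Csum_list (map (fun d =>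
     if excluded_middle_informative (Nat.divide (Nat.pow d beta) m)
     then Cpow_pos (INR d) (Cmul (RtoC (INR beta)) z)
     else Cx0) (seq 1 m)).

Definition Lambda_beta (beta k m n : nat) : Cx :=
  Csum_list (map (fun d =>
     if excluded_middle_informative (Nat.divide d n)
     then Cmul (ramanujan_beta beta d m) (RtoC (ln (INR (n / d)) ^ k))
     else Cx0) (seq 1 n)).

Definition dirichlet_term (beta k m : nat) (s : Cx) (n : nat) : Cx :=
  Cdiv (Lambda_beta beta k m n) (Cpow_pos (INR n) s).

(** Lambda^(beta)_{k,m} is the Dirichlet convolution c * L_k of the
   Ramanujan sums c(q) = c_q^(beta)(m) with L_k(n) = log^k n, and c itself is
   the convolution mu * g of the Moebius function with
   g(e) = e^beta [e^beta | m].  The product of two absolutely convergent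
   Dirichlet series is the Dirichlet series of the convolution, so it suffices
   to know the three factors:
   - sum mu(n) n^{-s} = 1 / zeta(s), because mu * 1 = [n = 1];
   - sum g(n) n^{-s} = sigma^(beta)_{1-s/beta}(m), a finite sum;
   - sum log^k(n) n^{-s} = (-1)^k zeta^(k)(s), by termwise differentiation. *)

From Pilot Require Import Defs.
From Stdlib Require Import Reals Lra Lia Arith List ClassicalEpsilon FunctionalExtensionality.
From mathcomp Require ssreflect ssrfun ssrbool eqtype ssrnat div.
Import ListNotations.
Open Scope R_scope.

Notation xm P := (excluded_middle_informative P).

(** ** Complex arithmetic *)

Lemma Cx_ext (z w : Cx) : fst z = fst w -> snd z = snd w -> z = w.
Proof. destruct z, w; simpl; intros; subst; auto. Qed.

(** [cring] proves identities of the commutative ring [Cx]: it abstracts every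
    complex subterm that is not a ring operation, splits into real and
    imaginary parts and calls [ring]. *)
Ltac cx_destruct := repeat match goal with z : Cx |- _ => destruct z end.
Ltac cx_generalize := repeat match goal with |- context [?t] =>
  match type of t with Cx =>
   lazymatch t with
   | Cadd _ _ => fail | Cmul _ _ => fail | Copp _ => fail | Csub _ _ => fail | RtoC _ => fail
   | Cx0 => fail | Cx1 => fail | (_,_) => fail
   | _ => tryif is_var t then fail else (generalize t; intro) end end end.
Ltac cring := cx_generalize; cx_destruct; apply Cx_ext;
  unfold Cadd, Csub, Copp, Cmul, RtoC, Cx0, Cx1; simpl; ring.

Lemma Cadd_0_l z : Cadd Cx0 z = z. Proof. cring. Qed.
Lemma Cadd_0_r z : Cadd z Cx0 = z. Proof. cring. Qed.
Lemma Cadd_assoc z w u : Cadd z (Cadd w u) = Cadd (Cadd z w) u. Proof. cring. Qed.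
Lemma Cmul_comm z w : Cmul z w = Cmul w z. Proof. cring. Qed.
Lemma Cmul_assoc z w u : Cmul z (Cmul w u) = Cmul (Cmul z w) u. Proof. cring. Qed.
Lemma Cmul_0_l z : Cmul Cx0 z = Cx0. Proof. cring. Qed.
Lemma Cmul_0_r z : Cmul z Cx0 = Cx0. Proof. cring. Qed.
Lemma Cmul_1_l z : Cmul Cx1 z = z. Proof. cring. Qed.
Lemma Cmul_1_r z : Cmul z Cx1 = z. Proof. cring. Qed.
Lemma RtoC_mul a b : RtoC (a * b) = Cmul (RtoC a) (RtoC b). Proof. cring. Qed.
Lemma RtoC_add a b : RtoC (a + b) = Cadd (RtoC a) (RtoC b). Proof. cring. Qed.
Lemma RtoC_inj a b : RtoC a = RtoC b -> a = b.
Proof. intros H. unfold RtoC in H. inversion H. auto. Qed.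

Lemma Cnorm_nonneg z : 0 <= Cnorm z.
Proof. unfold Cnorm. apply sqrt_pos. Qed.

Lemma Cnorm_sq z : Cnorm z * Cnorm z = fst z * fst z + snd z * snd z.
Proof. unfold Cnorm. rewrite sqrt_sqrt; nra. Qed.

Lemma Cnorm_ge_fst z : Rabs (fst z) <= Cnorm z.
Proof.
  unfold Cnorm. rewrite <- sqrt_Rsqr_abs. apply sqrt_le_1_alt. unfold Rsqr. nra.
Qed.

Lemma Cnorm_ge_snd z : Rabs (snd z) <= Cnorm z.
Proof.
  unfold Cnorm. rewrite <- sqrt_Rsqr_abs. apply sqrt_le_1_alt. unfold Rsqr. nra.
Qed.

Lemma Cnorm_le_sum z : Cnorm z <= Rabs (fst z) + Rabs (snd z).
Proof.
  destruct z as [a b]. unfold Cnorm; simpl.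
  pose proof (Rabs_pos a); pose proof (Rabs_pos b).
  assert (Ha : a * a = Rabs a * Rabs a) by (rewrite <- Rabs_mult; symmetry; apply Rabs_pos_eq; nra).
  assert (Hb : b * b = Rabs b * Rabs b) by (rewrite <- Rabs_mult; symmetry; apply Rabs_pos_eq; nra).
  rewrite <- (sqrt_Rsqr (Rabs a + Rabs b)) by lra. apply sqrt_le_1_alt.
  unfold Rsqr. rewrite Ha, Hb. nra.
Qed.

Lemma Cnorm_mul z w : Cnorm (Cmul z w) = Cnorm z * Cnorm w.
Proof.
  unfold Cnorm, Cmul; destruct z as [a b], w as [c d]; simpl.
  rewrite <- sqrt_mult_alt by nra. f_equal. ring.
Qed.

Lemma Cnorm_RtoC r : Cnorm (RtoC r) = Rabs r.
Proof. unfold Cnorm, RtoC; simpl. rewrite <- sqrt_Rsqr_abs. unfold Rsqr. f_equal. ring. Qed.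

Lemma Cnorm_opp z : Cnorm (Copp z) = Cnorm z.
Proof. unfold Cnorm, Copp; simpl. f_equal; ring. Qed.

Lemma Cnorm_triangle z w : Cnorm (Cadd z w) <= Cnorm z + Cnorm w.
Proof.
  pose proof (Cnorm_nonneg z); pose proof (Cnorm_nonneg w); pose proof (Cnorm_nonneg (Cadd z w)).
  (* Cauchy-Schwarz for the real inner product of z and w *)
  assert (Hcs : fst z * fst w + snd z * snd w <= Cnorm z * Cnorm w).
  { destruct (Rle_dec (fst z * fst w + snd z * snd w) 0); [nra |].
    apply Rsqr_incr_0_var; [| nra]. unfold Rsqr.
    replace (Cnorm z * Cnorm w * (Cnorm z * Cnorm w))
      with ((Cnorm z * Cnorm z) * (Cnorm w * Cnorm w)) by ring.
    rewrite !Cnorm_sq. destruct z as [a b], w as [c d]; simpl.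
    pose proof (Rle_0_sqr (a * d - b * c)). unfold Rsqr in *. nra. }
  apply Rsqr_incr_0_var; [| lra]. unfold Rsqr.
  replace ((Cnorm z + Cnorm w) * (Cnorm z + Cnorm w))
    with (Cnorm z * Cnorm z + Cnorm w * Cnorm w + 2 * (Cnorm z * Cnorm w)) by ring.
  rewrite !Cnorm_sq. destruct z as [a b], w as [c d]; unfold Cadd; simpl in *. nra.
Qed.

Lemma Cnorm_0 : Cnorm Cx0 = 0.
Proof. unfold Cnorm, Cx0; simpl. replace (0*0+0*0) with 0 by ring. apply sqrt_0. Qed.

Lemma Cnorm_eq_0 z : Cnorm z = 0 -> z = Cx0.
Proof.
  intros H. assert (Cnorm z * Cnorm z = 0) by (rewrite H; ring).
  rewrite Cnorm_sq in H0. destruct z as [a b]; simpl in *. unfold Cx0. f_equal; nra.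
Qed.

Lemma Cnorm_pos z : z <> Cx0 -> 0 < Cnorm z.
Proof.
  intros H. destruct (Cnorm_nonneg z); auto. exfalso; apply H; apply Cnorm_eq_0; auto.
Qed.

(** Two complex numbers that are arbitrarily close are equal: the common core
    of every uniqueness-of-limit argument below. *)
Lemma Cx_eq_of_close (l1 l2 : Cx) :
  (forall e, e > 0 -> exists a, Cnorm (Csub a l1) < e /\ Cnorm (Csub a l2) < e) -> l1 = l2.
Proof.
  intros H. destruct (Req_dec (Cnorm (Csub l1 l2)) 0) as [E|E].
  - apply Cnorm_eq_0 in E. cx_destruct. unfold Csub, Cadd, Copp, Cx0 in E; simpl in E.
    inversion E. f_equal; lra.
  - pose proof (Cnorm_nonneg (Csub l1 l2)). set (e := Cnorm (Csub l1 l2)) in *.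
    destruct (H (e / 2)) as [a [H1 H2]]; [lra |].
    assert (Hsplit : Csub l1 l2 = Cadd (Copp (Csub a l1)) (Csub a l2)) by cring.
    assert (e <= Cnorm (Csub a l1) + Cnorm (Csub a l2)).
    { unfold e. rewrite Hsplit, <- (Cnorm_opp (Csub a l1)). apply Cnorm_triangle. }
    lra.
Qed.

Lemma fst_add_lower z h delta : Cnorm h < delta -> fst z - delta < fst (Cadd z h).
Proof.
  intros H. pose proof (Cnorm_ge_fst h). pose proof (Rle_abs (- fst h)).
  rewrite Rabs_Ropp in *. unfold Cadd; simpl. lra.
Qed.

Lemma Cmul_inv_r z : z <> Cx0 -> Cmul z (Cinv z) = Cx1.
Proof.
  intros H. assert (fst z * fst z + snd z * snd z <> 0).
  { intros E. apply H. destruct z as [a b]; simpl in *; unfold Cx0; f_equal; nra. }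
  destruct z as [a b]; simpl in *. unfold Cmul, Cinv, Cx1; simpl. f_equal; field; auto.
Qed.

Lemma Cinv_unique z w : Cmul z w = Cx1 -> Cinv z = w.
Proof.
  intros H. assert (Hz : z <> Cx0).
  { intros ->. rewrite Cmul_0_l in H. unfold Cx0, Cx1 in H. inversion H. lra. }
  rewrite <- (Cmul_1_r (Cinv z)), <- H, Cmul_assoc, (Cmul_comm (Cinv z)), Cmul_inv_r; auto.
  apply Cmul_1_l.
Qed.

Lemma Cinv_mul z w : z <> Cx0 -> w <> Cx0 -> Cinv (Cmul z w) = Cmul (Cinv z) (Cinv w).
Proof.
  intros Hz Hw. apply Cinv_unique.
  replace (Cmul (Cmul z w) (Cmul (Cinv z) (Cinv w)))
    with (Cmul (Cmul z (Cinv z)) (Cmul w (Cinv w))) by cring.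
  rewrite !Cmul_inv_r by auto. cring.
Qed.

Lemma Cnorm_inv z : z <> Cx0 -> Cnorm (Cinv z) = / Cnorm z.
Proof.
  intros H. pose proof (Cnorm_pos z H).
  assert (Cnorm z * Cnorm (Cinv z) = 1).
  { rewrite <- Cnorm_mul, Cmul_inv_r by auto. unfold Cnorm, Cx1; simpl.
    replace (1*1+0*0) with 1 by ring. apply sqrt_1. }
  field_simplify_eq; lra.
Qed.

Lemma Cmul_integral z w : Cmul z w = Cx0 -> z <> Cx0 -> w = Cx0.
Proof.
  intros H Hz. rewrite <- (Cmul_1_l w), <- (Cmul_inv_r z Hz), (Cmul_comm z), <- Cmul_assoc, H.
  apply Cmul_0_r.
Qed.

Lemma Cexp_add z w : Cexp (Cadd z w) = Cmul (Cexp z) (Cexp w).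
Proof.
  destruct z as [a b], w as [c d]; unfold Cexp, Cadd, Cmul; simpl.
  rewrite exp_plus, cos_plus, sin_plus. apply Cx_ext; simpl; ring.
Qed.

Lemma Cnorm_Cexp z : Cnorm (Cexp z) = exp (fst z).
Proof.
  destruct z as [a b]; unfold Cnorm, Cexp; simpl.
  replace (exp a * cos b * (exp a * cos b) + exp a * sin b * (exp a * sin b))
    with (Rsqr (exp a) * (Rsqr (sin b) + Rsqr (cos b))) by (unfold Rsqr; ring).
  rewrite sin2_cos2, Rmult_1_r. apply sqrt_Rsqr. left; apply exp_pos.
Qed.

Lemma Cexp_nz z : Cexp z <> Cx0.
Proof.
  intros H. pose proof (Cnorm_Cexp z). rewrite H, Cnorm_0 in H0.
  pose proof (exp_pos (fst z)). lra.
Qed.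

Lemma Cexp_0 : Cexp Cx0 = Cx1.
Proof. unfold Cexp, Cx0, Cx1; simpl. rewrite exp_0, cos_0, sin_0. f_equal; ring. Qed.

Lemma Cexp_real r : Cexp (RtoC r) = RtoC (exp r).
Proof. unfold Cexp, RtoC; simpl. rewrite cos_0, sin_0. f_equal; ring. Qed.

Lemma Cpow_add x z w : Cpow_pos x (Cadd z w) = Cmul (Cpow_pos x z) (Cpow_pos x w).
Proof. unfold Cpow_pos. rewrite <- Cexp_add. f_equal. cring. Qed.

Lemma Cpow_nz x z : Cpow_pos x z <> Cx0.
Proof. apply Cexp_nz. Qed.

Lemma Cnorm_Cpow x z : Cnorm (Cpow_pos x z) = exp (ln x * fst z).
Proof. unfold Cpow_pos. rewrite Cnorm_Cexp. unfold Cmul, RtoC; simpl. f_equal; ring. Qed.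

Lemma Cpow_mulbase x y z : 0 < x -> 0 < y ->
  Cpow_pos (x * y) z = Cmul (Cpow_pos x z) (Cpow_pos y z).
Proof. intros. unfold Cpow_pos. rewrite <- Cexp_add, ln_mult by auto. f_equal. cring. Qed.

Lemma Cinv_Cpow x z : Cinv (Cpow_pos x z) = Cpow_pos x (Copp z).
Proof.
  apply Cinv_unique. rewrite <- Cpow_add. unfold Cpow_pos.
  replace (Cmul (RtoC (ln x)) (Cadd z (Copp z))) with Cx0 by cring. apply Cexp_0.
Qed.

Lemma Cpow_real x r : 0 < x -> Cpow_pos x (RtoC r) = RtoC (Rpower x r).
Proof. intros. unfold Cpow_pos, Rpower. rewrite <- RtoC_mul, Cexp_real. do 2 f_equal. ring. Qed.

Lemma Cpow_1 z : Cpow_pos 1 z = Cx1.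
Proof. unfold Cpow_pos. rewrite ln_1. replace (Cmul (RtoC 0) z) with Cx0 by cring. apply Cexp_0. Qed.

(** ** Finite sums over lists of indices *)

Definition csum (l : list nat) (f : nat -> Cx) : Cx := Csum_list (map f l).
Definition rsum (l : list nat) (f : nat -> R) : R := fold_right Rplus 0 (map f l).

Lemma csum_cons a l f : csum (a :: l) f = Cadd (f a) (csum l f). Proof. reflexivity. Qed.
Lemma rsum_cons a l f : rsum (a :: l) f = f a + rsum l f. Proof. reflexivity. Qed.

Lemma csum_app l1 l2 f : csum (l1 ++ l2) f = Cadd (csum l1 f) (csum l2 f).
Proof.
  induction l1; simpl. { rewrite Cadd_0_l; auto. }
  rewrite !csum_cons, IHl1. apply Cadd_assoc.
Qed.

Lemma rsum_app l1 l2 f : rsum (l1 ++ l2) f = rsum l1 f + rsum l2 f.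
Proof. induction l1; simpl. { unfold rsum; simpl; ring. } rewrite !rsum_cons, IHl1. ring. Qed.

Lemma csum_ext l f g : (forall x, In x l -> f x = g x) -> csum l f = csum l g.
Proof.
  induction l; intros H; auto. rewrite !csum_cons, H by (simpl; auto).
  rewrite IHl; auto. intros; apply H; right; auto.
Qed.

Lemma rsum_ext l f g : (forall x, In x l -> f x = g x) -> rsum l f = rsum l g.
Proof.
  induction l; intros H; auto. rewrite !rsum_cons, H by (simpl; auto).
  rewrite IHl; auto. intros; apply H; right; auto.
Qed.

Lemma csum_add l f g : csum l (fun x => Cadd (f x) (g x)) = Cadd (csum l f) (csum l g).
Proof. induction l. { unfold csum; simpl; cring. } rewrite !csum_cons, IHl. cring. Qed.

Lemma csum_sub l f g : csum l (fun x => Csub (f x) (g x)) = Csub (csum l f) (csum l g).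
Proof. induction l. { unfold csum; simpl; cring. } rewrite !csum_cons, IHl. cring. Qed.

Lemma csum_scal l c f : csum l (fun x => Cmul c (f x)) = Cmul c (csum l f).
Proof. induction l. { unfold csum; simpl; cring. } rewrite !csum_cons, IHl. cring. Qed.

Lemma csum_zero l : csum l (fun _ => Cx0) = Cx0.
Proof. induction l; auto. rewrite csum_cons, IHl. cring. Qed.

Lemma rsum_add l f g : rsum l (fun x => f x + g x) = rsum l f + rsum l g.
Proof. induction l. { unfold rsum; simpl; ring. } rewrite !rsum_cons, IHl. ring. Qed.

Lemma rsum_scal l c f : rsum l (fun x => c * f x) = c * rsum l f.
Proof. induction l. { unfold rsum; simpl; ring. } rewrite !rsum_cons, IHl. ring. Qed.

Lemma rsum_zero l : rsum l (fun _ => 0) = 0.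
Proof. induction l; auto. rewrite rsum_cons, IHl. ring. Qed.

Lemma rsum_le l f g : (forall x, In x l -> f x <= g x) -> rsum l f <= rsum l g.
Proof.
  induction l; intros H. { unfold rsum; simpl; lra. }
  rewrite !rsum_cons. pose proof (H a (or_introl eq_refl)).
  assert (rsum l f <= rsum l g) by (apply IHl; intros; apply H; right; auto). lra.
Qed.

Lemma rsum_nonneg l f : (forall x, In x l -> 0 <= f x) -> 0 <= rsum l f.
Proof. intros H. rewrite <- (rsum_zero l). apply rsum_le; auto. Qed.

Lemma csum_norm l f : Cnorm (csum l f) <= rsum l (fun x => Cnorm (f x)).
Proof.
  induction l. { unfold csum, rsum; simpl. rewrite Cnorm_0; lra. }
  rewrite csum_cons, rsum_cons. pose proof (Cnorm_triangle (f a) (csum l f)). lra.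
Qed.

Lemma csum_RtoC l f : csum l (fun x => RtoC (f x)) = RtoC (rsum l f).
Proof. induction l. reflexivity. rewrite csum_cons, rsum_cons, IHl, RtoC_add. reflexivity. Qed.

Lemma csum_fst l x : fst (csum l x) = rsum l (fun n => fst (x n)).
Proof. induction l; auto. rewrite csum_cons, rsum_cons. simpl. rewrite IHl. auto. Qed.

Lemma csum_snd l x : snd (csum l x) = rsum l (fun n => snd (x n)).
Proof. induction l; auto. rewrite csum_cons, rsum_cons. simpl. rewrite IHl. auto. Qed.

Lemma csum_swap l1 l2 (G : nat -> nat -> Cx) :
  csum l1 (fun x => csum l2 (fun y => G x y)) = csum l2 (fun y => csum l1 (fun x => G x y)).
Proof.
  induction l1. { simpl. rewrite csum_zero. reflexivity. }
  rewrite csum_cons, IHl1, <- csum_add. apply csum_ext. intros; rewrite csum_cons; auto.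
Qed.

Lemma csum_mul l1 l2 f g :
  Cmul (csum l1 f) (csum l2 g) = csum l1 (fun x => csum l2 (fun y => Cmul (f x) (g y))).
Proof. induction l1. { unfold csum; simpl; cring. } rewrite !csum_cons, <- IHl1, csum_scal. cring. Qed.

Lemma rsum_mul l1 l2 f g : rsum l1 f * rsum l2 g = rsum l1 (fun x => rsum l2 (fun y => f x * g y)).
Proof. induction l1. { unfold rsum; simpl; ring. } rewrite !rsum_cons, <- IHl1, rsum_scal. ring. Qed.

Lemma csum_shift a n f : csum (seq (S a) n) f = csum (seq a n) (fun j => f (S j)).
Proof. revert a; induction n; intros a; auto. simpl. rewrite !csum_cons, IHn. auto. Qed.

Lemma csum_seq_trunc a n n' f : (n' <= n)%nat ->
  (forall x, (a + n' <= x)%nat -> f x = Cx0) -> csum (seq a n) f = csum (seq a n') f.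
Proof.
  intros Hn Hf. replace n with (n' + (n - n'))%nat by lia.
  rewrite seq_app, csum_app, (csum_ext (seq (a + n') _) _ (fun _ => Cx0)), csum_zero, Cadd_0_r.
  reflexivity. intros x Hx. apply in_seq in Hx. apply Hf. lia.
Qed.

Lemma csum_single a n c (v : Cx) :
  csum (seq a n) (fun x => if Nat.eq_dec x c then v else Cx0) =
  if xm (a <= c < a + n)%nat then v else Cx0.
Proof.
  revert a; induction n; intros a.
  - simpl. destruct (xm _); auto. lia.
  - simpl seq. rewrite csum_cons, IHn.
    destruct (Nat.eq_dec a c); destruct (xm (S a <= c < S a + n)%nat);
      destruct (xm (a <= c < a + S n)%nat); try lia; subst; cring.
Qed.

(** ** Series indexed from 1

    [series_to x l] says that [sum_{n>=1} x n] converges to [l];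
    [bounded_sums g] says that the partial sums of [g] are bounded, which for
    [g = Cnorm o x] is absolute convergence. *)

Definition psum (x : nat -> Cx) (M : nat) : Cx := csum (seq 1 M) x.
Definition series_to (x : nat -> Cx) (l : Cx) : Prop :=
  forall eps, eps > 0 -> exists N, forall M, (N <= M)%nat -> Cnorm (Csub (psum x M) l) < eps.
Definition bounded_sums (g : nat -> R) : Prop := exists B, forall M, rsum (seq 1 M) g <= B.

Lemma psum_S x M : psum x (S M) = Cadd (psum x M) (x (S M)).
Proof. unfold psum. rewrite seq_S, csum_app. simpl. rewrite csum_cons, Cadd_0_r. reflexivity. Qed.

Lemma rsum_S g M : rsum (seq 1 (S M)) g = rsum (seq 1 M) g + g (S M).
Proof. rewrite seq_S, rsum_app. unfold rsum at 2. simpl. ring. Qed.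

Lemma rsum_mono g M1 M2 : (forall n, 0 <= g n) -> (M1 <= M2)%nat ->
  rsum (seq 1 M1) g <= rsum (seq 1 M2) g.
Proof.
  intros Hg H. replace M2 with (M1 + (M2 - M1))%nat by lia. rewrite seq_app, rsum_app.
  pose proof (rsum_nonneg (seq (1 + M1) (M2 - M1)) g (fun x _ => Hg x)). lra.
Qed.

(** Translation to the series notions of [Defs], which start at index 0. *)

Lemma Cpartial_psum x N : Cpartial (fun i => x (S i)) N = psum x (S N).
Proof.
  induction N. { unfold psum; simpl. rewrite csum_cons, Cadd_0_r; auto. }
  simpl Cpartial. rewrite IHN, (psum_S x (S N)). reflexivity.
Qed.

Lemma sum_f_R0_rsum g N : sum_f_R0 (fun i => g (S i)) N = rsum (seq 1 (S N)) g.
Proof.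
  induction N. { simpl. rewrite rsum_cons. unfold rsum; simpl. ring. }
  simpl sum_f_R0. rewrite IHN, (rsum_S g (S N)). reflexivity.
Qed.

Lemma series_to_Cseries_conv x l : series_to x l -> Cseries_conv (fun i => x (S i)) l.
Proof.
  intros H eps He. destruct (H eps He) as [N HN]. exists N. intros n Hn.
  rewrite Cpartial_psum. apply HN. lia.
Qed.

Lemma Cseries_conv_series_to x l : Cseries_conv (fun i => x (S i)) l -> series_to x l.
Proof.
  intros H eps He. destruct (H eps He) as [N HN]. exists (S N). intros M HM.
  destruct M. lia. rewrite <- Cpartial_psum. apply HN. lia.
Qed.

Lemma bounded_Cseries_abs_conv x :
  bounded_sums (fun n => Cnorm (x n)) -> Cseries_abs_conv (fun i => x (S i)).
Proof.
  intros [B HB]. unfold Cseries_abs_conv.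
  destruct (growing_cv (fun N => sum_f_R0 (fun i => Cnorm (x (S i))) N)) as [l Hl].
  - intros n. simpl. pose proof (Cnorm_nonneg (x (S (S n)))). lra.
  - exists B. intros y [N ->]. rewrite (sum_f_R0_rsum (fun n => Cnorm (x n))). apply HB.
  - exists l; exact Hl.
Qed.

Definition tail_after (K : nat) (g : nat -> R) (d : nat) : R := if Nat.ltb K d then g d else 0.

Lemma tail_after_nonneg g K d : (forall n, 0 <= g n) -> 0 <= tail_after K g d.
Proof. intros. unfold tail_after. destruct (Nat.ltb K d); auto; lra. Qed.

Lemma tail_after_mono g K1 K2 d : (forall n, 0 <= g n) -> (K1 <= K2)%nat ->
  tail_after K2 g d <= tail_after K1 g d.
Proof.
  intros Hg H. unfold tail_after.
  destruct (Nat.ltb K2 d) eqn:E1; destruct (Nat.ltb K1 d) eqn:E2; try lra; [| apply Hg].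
  apply Nat.ltb_lt in E1; apply Nat.ltb_ge in E2; lia.
Qed.

Lemma rsum_tail_after g K M : (K <= M)%nat ->
  rsum (seq 1 M) (tail_after K g) = rsum (seq (S K) (M - K)) g.
Proof.
  intros H. replace M with (K + (M - K))%nat at 1 by lia. rewrite seq_app, rsum_app.
  replace (1 + K)%nat with (S K) by lia.
  rewrite (rsum_ext (seq 1 K) (tail_after K g) (fun _ => 0)), rsum_zero,
    (rsum_ext (seq (S K) (M - K)) (tail_after K g) g); [ring | |];
  intros d Hd; apply in_seq in Hd; unfold tail_after;
  destruct (Nat.ltb K d) eqn:E; auto; [apply Nat.ltb_ge in E | apply Nat.ltb_lt in E]; lia.
Qed.

Lemma rsum_tail_after_small g K M : (M <= K)%nat -> rsum (seq 1 M) (tail_after K g) = 0.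
Proof.
  intros H. rewrite (rsum_ext _ _ (fun _ => 0)) by
    (intros d Hd; apply in_seq in Hd; unfold tail_after;
     destruct (Nat.ltb K d) eqn:E; auto; apply Nat.ltb_lt in E; lia).
  apply rsum_zero.
Qed.

Lemma bounded_sums_tail g : (forall n, 0 <= g n) -> bounded_sums g ->
  forall eps, eps > 0 -> exists K, forall M, rsum (seq 1 M) (tail_after K g) < eps.
Proof.
  intros Hg [B HB] eps He.
  set (u := fun M => rsum (seq 1 M) g).
  assert (Hu : Un_growing u) by (intros n; apply rsum_mono; auto).
  destruct (growing_cv u Hu) as [l Hl]. { exists B. intros y [N ->]. apply HB. }
  destruct (Hl eps He) as [K HK]. exists K. intros M.
  destruct (le_lt_dec K M).
  - assert (Hsplit : rsum (seq 1 M) (tail_after K g) = u M - u K).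
    { rewrite rsum_tail_after by auto. unfold u.
      replace M with (K + (M - K))%nat at 2 by lia. rewrite seq_app, rsum_app.
      replace (1 + K)%nat with (S K) by lia. ring. }
    rewrite Hsplit. pose proof (HK K (le_n K)). unfold R_dist in H.
    pose proof (growing_ineq u l Hu Hl M). apply Rabs_def2 in H. lra.
  - rewrite rsum_tail_after_small by lia. lra.
Qed.

(** Absolutely convergent series converge (completeness of [R], applied to the
    real and imaginary parts). *)

Lemma Cauchy_component x (proj : Cx -> R) : (forall z, Rabs (proj z) <= Cnorm z) ->
  (forall l f, proj (csum l f) = rsum l (fun n => proj (f n))) ->
  bounded_sums (fun n => Cnorm (x n)) -> Cauchy_crit (fun N => proj (psum x N)).
Proof.
  intros Hp Hl Hb eps He.
  destruct (bounded_sums_tail _ (fun n => Cnorm_nonneg (x n)) Hb eps He) as [K HK].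
  exists K. intros n m Hn Hm. unfold R_dist.
  assert (Hgen : forall a b, (K <= a)%nat -> (a <= b)%nat ->
            Rabs (proj (psum x b) - proj (psum x a)) < eps).
  { intros a b Ha Hab. unfold psum. rewrite !Hl.
    replace b with (a + (b - a))%nat at 1 by lia. rewrite seq_app, rsum_app.
    replace (1 + a)%nat with (S a) by lia.
    match goal with |- Rabs (?A + ?T - ?A) < _ => replace (A + T - A) with T by ring end.
    rewrite <- Hl. eapply Rle_lt_trans; [apply Hp |]. eapply Rle_lt_trans; [apply csum_norm |].
    rewrite <- rsum_tail_after by auto. eapply Rle_lt_trans; [| apply (HK b)].
    apply rsum_le. intros. apply tail_after_mono; auto. intros; apply Cnorm_nonneg. }
  destruct (le_lt_dec m n).
  - apply Hgen; auto.
  - rewrite Rabs_minus_sym. apply Hgen; lia.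
Qed.

Lemma abs_summable_converges x : bounded_sums (fun n => Cnorm (x n)) -> exists l, series_to x l.
Proof.
  intros Hb.
  destruct (R_complete _ (Cauchy_component x fst Cnorm_ge_fst csum_fst Hb)) as [l1 H1].
  destruct (R_complete _ (Cauchy_component x snd Cnorm_ge_snd csum_snd Hb)) as [l2 H2].
  exists (l1, l2). intros eps He.
  destruct (H1 (eps/2)) as [N1 HN1]; [lra |]. destruct (H2 (eps/2)) as [N2 HN2]; [lra |].
  exists (max N1 N2). intros M HM.
  eapply Rle_lt_trans; [apply Cnorm_le_sum |].
  specialize (HN1 M ltac:(lia)). specialize (HN2 M ltac:(lia)). unfold R_dist in *.
  unfold Csub, Cadd, Copp; simpl. unfold Rminus in HN1, HN2. lra.
Qed.

Lemma series_to_unique x l1 l2 : series_to x l1 -> series_to x l2 -> l1 = l2.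
Proof.
  intros H1 H2. apply Cx_eq_of_close. intros e He.
  destruct (H1 e He) as [N1 HN1]. destruct (H2 e He) as [N2 HN2].
  exists (psum x (max N1 N2)). split; [apply HN1 | apply HN2]; lia.
Qed.

Lemma Cseries_sum_spec x l : series_to x l -> Cseries_sum (fun i => x (S i)) = l.
Proof.
  intros H. unfold Cseries_sum.
  assert (Hex : exists l, Cseries_conv (fun i => x (S i)) l)
    by (exists l; apply series_to_Cseries_conv; auto).
  pose proof (epsilon_spec C_inhabited _ Hex) as Hs.
  apply Cseries_conv_series_to in Hs. eapply series_to_unique; eauto.
Qed.

Lemma series_to_ext x y l : (forall n, (1 <= n)%nat -> x n = y n) -> series_to x l -> series_to y l.
Proof.
  intros Hxy H eps He. destruct (H eps He) as [N HN]. exists N. intros M HM.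
  replace (psum y M) with (psum x M); auto.
  unfold psum. apply csum_ext. intros n Hn. apply in_seq in Hn. apply Hxy. lia.
Qed.

Lemma bounded_sums_ext f g : (forall n, (1 <= n)%nat -> f n = g n) -> bounded_sums f -> bounded_sums g.
Proof.
  intros Hfg [B HB]. exists B. intros M. rewrite <- (rsum_ext (seq 1 M) f g); auto.
  intros n Hn; apply in_seq in Hn; apply Hfg; lia.
Qed.

Lemma bounded_sums_le f g c : (forall n, (1 <= n)%nat -> f n <= c * g n) -> 0 <= c ->
  bounded_sums g -> bounded_sums f.
Proof.
  intros Hfg Hc [B HB]. exists (c * B). intros M. eapply Rle_trans.
  - apply (rsum_le _ f (fun n => c * g n)). intros n Hn; apply in_seq in Hn; apply Hfg; lia.
  - rewrite rsum_scal. apply Rmult_le_compat_l; auto.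
Qed.

Lemma bounded_sums_finite f K : (forall n, 0 <= f n) -> (forall n, (K < n)%nat -> f n = 0) ->
  bounded_sums f.
Proof.
  intros Hf HK. exists (rsum (seq 1 K) f). intros M. destruct (le_lt_dec M K).
  - apply rsum_mono; auto.
  - replace M with (K + (M - K))%nat by lia. rewrite seq_app, rsum_app.
    rewrite (rsum_ext (seq (1 + K) (M - K)) _ (fun _ => 0)), rsum_zero; [lra |].
    intros n Hn. apply in_seq in Hn. apply HK. lia.
Qed.

Lemma series_to_add x y l1 l2 : series_to x l1 -> series_to y l2 ->
  series_to (fun n => Cadd (x n) (y n)) (Cadd l1 l2).
Proof.
  intros H1 H2 eps He.
  destruct (H1 (eps/2)) as [N1 HN1]; [lra |]. destruct (H2 (eps/2)) as [N2 HN2]; [lra |].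
  exists (max N1 N2). intros M HM. specialize (HN1 M ltac:(lia)). specialize (HN2 M ltac:(lia)).
  unfold psum in *. rewrite csum_add.
  replace (Csub (Cadd (csum (seq 1 M) x) (csum (seq 1 M) y)) (Cadd l1 l2)) with
    (Cadd (Csub (csum (seq 1 M) x) l1) (Csub (csum (seq 1 M) y) l2)) by cring.
  eapply Rle_lt_trans; [apply Cnorm_triangle | lra].
Qed.

Lemma series_to_scal x l c : series_to x l -> series_to (fun n => Cmul c (x n)) (Cmul c l).
Proof.
  intros H eps He. pose proof (Cnorm_nonneg c).
  destruct (H (eps / (Cnorm c + 1))) as [N HN]; [apply Rdiv_lt_0_compat; lra |].
  exists N. intros M HM. specialize (HN M HM). unfold psum in *. rewrite csum_scal.
  replace (Csub (Cmul c (csum (seq 1 M) x)) (Cmul c l))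
    with (Cmul c (Csub (csum (seq 1 M) x) l)) by cring.
  rewrite Cnorm_mul. pose proof (Cnorm_nonneg (Csub (csum (seq 1 M) x) l)).
  apply Rle_lt_trans with ((Cnorm c + 1) * Cnorm (Csub (csum (seq 1 M) x) l)); [nra |].
  apply Rmult_lt_compat_l with (r := Cnorm c + 1) in HN; [| lra].
  replace ((Cnorm c + 1) * (eps / (Cnorm c + 1))) with eps in HN by (field; lra). lra.
Qed.

Lemma series_to_norm_bound x l B : series_to x l ->
  (forall M, rsum (seq 1 M) (fun n => Cnorm (x n)) <= B) -> Cnorm l <= B.
Proof.
  intros H HB. apply Rnot_lt_le. intros Hlt.
  destruct (H (Cnorm l - B)) as [N HN]; [lra |]. specialize (HN N (le_n N)).
  assert (Cnorm l <= Cnorm (psum x N) + Cnorm (Csub (psum x N) l)).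
  { replace l with (Cadd (psum x N) (Copp (Csub (psum x N) l))) at 1 by cring.
    rewrite <- (Cnorm_opp (Csub (psum x N) l)). apply Cnorm_triangle. }
  pose proof (csum_norm (seq 1 N) x). specialize (HB N). unfold psum in *. lra.
Qed.

Lemma series_to_finite x K : (forall n, (K < n)%nat -> x n = Cx0) -> series_to x (psum x K).
Proof.
  intros H eps He. exists K. intros M HM. unfold psum.
  rewrite (csum_seq_trunc 1 M K) by (auto; intros; apply H; lia).
  replace (Csub (csum (seq 1 K) x) (csum (seq 1 K) x)) with Cx0 by cring. rewrite Cnorm_0; lra.
Qed.

(** ** Dirichlet series and Dirichlet convolution *)

Definition dir_term (a : nat -> Cx) (s : Cx) (n : nat) : Cx := Cdiv (a n) (Cpow_pos (INR n) s).

Definition dconv (a b : nat -> Cx) (n : nat) : Cx :=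
  csum (seq 1 n) (fun d => if xm (Nat.divide d n) then Cmul (a d) (b (n / d)%nat) else Cx0).

Lemma INR_pos n : (1 <= n)%nat -> 0 < INR n.
Proof. intros. apply lt_0_INR. lia. Qed.

Lemma csum_factor_fiber (F : nat -> nat -> Cx) M n d : (1 <= n <= M)%nat -> (1 <= d)%nat ->
  csum (seq 1 M) (fun e => if Nat.eq_dec (d * e) n then F d e else Cx0) =
  if xm (Nat.divide d n) then F d (n / d)%nat else Cx0.
Proof.
  intros Hn Hd. destruct (xm (Nat.divide d n)) as [[q Hq]|Hndiv].
  - assert (Hq' : (n / d)%nat = q) by (subst n; apply Nat.div_mul; lia).
    rewrite (csum_ext _ _ (fun e => if Nat.eq_dec e q then F d q else Cx0)).
    + rewrite csum_single, Hq'. destruct (xm _); auto. subst n. nia.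
    + intros e He. destruct (Nat.eq_dec (d * e) n); destruct (Nat.eq_dec e q); subst; auto.
      * exfalso. apply n0. apply Nat.mul_cancel_l with d; lia.
      * exfalso. apply n0. lia.
  - rewrite (csum_ext _ _ (fun _ => Cx0)); [apply csum_zero |].
    intros e He. destruct (Nat.eq_dec (d * e) n); auto. exfalso. apply Hndiv. exists e. lia.
Qed.

Lemma divisor_sum_swap (F : nat -> nat -> Cx) M :
  csum (seq 1 M) (fun n => csum (seq 1 n) (fun d => if xm (Nat.divide d n) then F d (n / d)%nat else Cx0))
  = csum (seq 1 M) (fun d => csum (seq 1 M) (fun e => if le_dec (d * e) M then F d e else Cx0)).
Proof.
  rewrite (csum_ext (seq 1 M) _ (fun n => csum (seq 1 M) (fun d =>
             csum (seq 1 M) (fun e => if Nat.eq_dec (d * e) n then F d e else Cx0)))).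
  2:{ intros n Hn. apply in_seq in Hn.
      rewrite (csum_ext (seq 1 M) _ (fun d => if xm (Nat.divide d n) then F d (n / d)%nat else Cx0)).
      - symmetry. apply csum_seq_trunc; [lia |]. intros d Hd.
        destruct (xm _) as [Hdiv|]; auto. apply Nat.divide_pos_le in Hdiv; lia.
      - intros d Hd. apply in_seq in Hd. apply csum_factor_fiber; lia. }
  rewrite csum_swap. apply csum_ext. intros d Hd. apply in_seq in Hd.
  rewrite csum_swap. apply csum_ext. intros e He. apply in_seq in He.
  rewrite (csum_ext _ _ (fun n => if Nat.eq_dec n (d * e) then F d e else Cx0))
    by (intros n _; destruct (Nat.eq_dec (d * e) n); destruct (Nat.eq_dec n (d * e)); auto; lia).
  rewrite csum_single. destruct (xm _); destruct (le_dec (d * e) M); auto; nia.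
Qed.

Lemma rdivisor_sum_swap (F : nat -> nat -> R) M :
  rsum (seq 1 M) (fun n => rsum (seq 1 n) (fun d => if xm (Nat.divide d n) then F d (n / d)%nat else 0))
  = rsum (seq 1 M) (fun d => rsum (seq 1 M) (fun e => if le_dec (d * e) M then F d e else 0)).
Proof.
  apply RtoC_inj. rewrite <- !csum_RtoC.
  rewrite (csum_ext _ _ (fun n => csum (seq 1 n) (fun d =>
             if xm (Nat.divide d n) then RtoC (F d (n / d)%nat) else Cx0))).
  - rewrite (divisor_sum_swap (fun d e => RtoC (F d e))).
    apply csum_ext. intros d _. rewrite <- csum_RtoC. apply csum_ext. intros e _.
    destruct (le_dec (d * e) M); reflexivity.
  - intros n _. rewrite <- csum_RtoC. apply csum_ext. intros d _. destruct (xm _); reflexivity.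
Qed.

(** [n^{-s}] is completely multiplicative, so the terms of a convolution factor. *)
Lemma dir_term_dconv a b s n : (1 <= n)%nat ->
  dir_term (dconv a b) s n = csum (seq 1 n) (fun d =>
    if xm (Nat.divide d n) then Cmul (dir_term a s d) (dir_term b s (n / d)%nat) else Cx0).
Proof.
  intros Hn. unfold dir_term, dconv, Cdiv. rewrite Cmul_comm, <- csum_scal. apply csum_ext.
  intros d Hd. apply in_seq in Hd. destruct (xm (Nat.divide d n)) as [[q Hq]|]; [| cring].
  assert (Hq' : (n / d)%nat = q) by (subst n; apply Nat.div_mul; lia).
  assert (1 <= q)%nat by (destruct q; lia).
  rewrite Hq'. replace (INR n) with (INR d * INR q) by (subst n; rewrite mult_INR; ring).
  rewrite Cpow_mulbase, Cinv_mul by (apply INR_pos || apply Cpow_nz; lia). cring.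
Qed.

Definition hyperbola_sum (x y : nat -> Cx) (M : nat) : Cx :=
  csum (seq 1 M) (fun d => csum (seq 1 M) (fun e => if le_dec (d * e) M then Cmul (x d) (y e) else Cx0)).

Lemma psum_dconv a b s M :
  psum (dir_term (dconv a b) s) M = hyperbola_sum (dir_term a s) (dir_term b s) M.
Proof.
  unfold psum, hyperbola_sum. rewrite <- (divisor_sum_swap (fun d e => Cmul (dir_term a s d) (dir_term b s e))).
  apply csum_ext. intros n Hn. apply in_seq in Hn. apply dir_term_dconv. lia.
Qed.

Lemma Cnorm_if (P : Prop) (c : {P} + {~P}) z :
  Cnorm (if c then z else Cx0) = if c then Cnorm z else 0.
Proof. destruct c; auto. apply Cnorm_0. Qed.

Lemma dconv_bounded a b s (Bx By : R) :
  (forall M, rsum (seq 1 M) (fun n => Cnorm (dir_term a s n)) <= Bx) ->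
  (forall M, rsum (seq 1 M) (fun n => Cnorm (dir_term b s n)) <= By) ->
  forall M, rsum (seq 1 M) (fun n => Cnorm (dir_term (dconv a b) s n)) <= Bx * By.
Proof.
  intros HBx HBy M. set (x := dir_term a s) in *. set (y := dir_term b s) in *.
  assert (Hnx : forall n, 0 <= Cnorm (x n)) by (intros; apply Cnorm_nonneg).
  assert (Hny : forall n, 0 <= Cnorm (y n)) by (intros; apply Cnorm_nonneg).
  apply Rle_trans with (rsum (seq 1 M) (fun n => rsum (seq 1 n) (fun d =>
    if xm (Nat.divide d n) then Cnorm (x d) * Cnorm (y (n / d)%nat) else 0))).
  { apply rsum_le. intros n Hn. apply in_seq in Hn. rewrite dir_term_dconv by lia. fold x y.
    eapply Rle_trans; [apply csum_norm |]. apply rsum_le. intros d _. rewrite Cnorm_if.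
    destruct (xm (Nat.divide d n)); [rewrite Cnorm_mul |]; lra. }
  rewrite (rdivisor_sum_swap (fun d e => Cnorm (x d) * Cnorm (y e))).
  apply Rle_trans with (rsum (seq 1 M) (fun d => rsum (seq 1 M) (fun e => Cnorm (x d) * Cnorm (y e)))).
  - apply rsum_le. intros d _. apply rsum_le. intros e _.
    destruct (le_dec (d * e) M); [lra | apply Rmult_le_pos; auto].
  - rewrite <- rsum_mul. apply Rmult_le_compat; auto; apply rsum_nonneg; auto.
Qed.

(** Truncating the product of two partial sums to the hyperbola [d e <= M]
    only loses terms with [d > K] or [e > K], as soon as [K^2 <= M]. *)
Lemma hyperbola_error (x y : nat -> Cx) K M : (K * K <= M)%nat ->
  Cnorm (Csub (hyperbola_sum x y M) (Cmul (psum x M) (psum y M)))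
  <= rsum (seq 1 M) (tail_after K (fun n => Cnorm (x n))) * rsum (seq 1 M) (fun n => Cnorm (y n))
   + rsum (seq 1 M) (fun n => Cnorm (x n)) * rsum (seq 1 M) (tail_after K (fun n => Cnorm (y n))).
Proof.
  intros HKM. set (tx := tail_after K (fun n => Cnorm (x n))). set (ty := tail_after K (fun n => Cnorm (y n))).
  assert (Hnx : forall n, 0 <= Cnorm (x n)) by (intros; apply Cnorm_nonneg).
  assert (Hny : forall n, 0 <= Cnorm (y n)) by (intros; apply Cnorm_nonneg).
  unfold hyperbola_sum, psum. rewrite csum_mul, <- csum_sub.
  rewrite (csum_ext _ _ (fun d => csum (seq 1 M) (fun e =>
     Csub (if le_dec (d * e) M then Cmul (x d) (y e) else Cx0) (Cmul (x d) (y e)))))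
    by (intros d _; symmetry; apply csum_sub).
  eapply Rle_trans; [apply csum_norm |].
  rewrite !rsum_mul, <- rsum_add. apply rsum_le. intros d Hd. apply in_seq in Hd.
  eapply Rle_trans; [apply csum_norm |]. rewrite <- rsum_add. apply rsum_le. intros e He. apply in_seq in He.
  pose proof (tail_after_nonneg _ K d Hnx). pose proof (tail_after_nonneg _ K e Hny).
  pose proof (Hnx d); pose proof (Hny e). fold tx ty in H, H0.
  destruct (le_dec (d * e) M).
  - replace (Csub (Cmul (x d) (y e)) (Cmul (x d) (y e))) with Cx0 by cring. rewrite Cnorm_0. nra.
  - replace (Csub Cx0 (Cmul (x d) (y e))) with (Copp (Cmul (x d) (y e))) by cring.
    rewrite Cnorm_opp, Cnorm_mul. unfold tx, ty, tail_after.
    destruct (Nat.ltb K d) eqn:E1; destruct (Nat.ltb K e) eqn:E2; try nra.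
    apply Nat.ltb_ge in E1, E2. exfalso. apply n. nia.
Qed.

Lemma hyperbola_sum_close (x y : nat -> Cx) :
  bounded_sums (fun n => Cnorm (x n)) -> bounded_sums (fun n => Cnorm (y n)) ->
  forall eps, eps > 0 -> exists N, forall M, (N <= M)%nat ->
    Cnorm (Csub (hyperbola_sum x y M) (Cmul (psum x M) (psum y M))) < eps.
Proof.
  intros [Bx HBx] [By HBy] eps He.
  assert (Hnx : forall n, 0 <= Cnorm (x n)) by (intros; apply Cnorm_nonneg).
  assert (Hny : forall n, 0 <= Cnorm (y n)) by (intros; apply Cnorm_nonneg).
  assert (HBx0 : 0 <= Bx) by (specialize (HBx 0%nat); exact HBx).
  assert (HBy0 : 0 <= By) by (specialize (HBy 0%nat); exact HBy).
  set (e1 := eps / (Bx + By + 1)). assert (He1 : e1 > 0) by (apply Rdiv_lt_0_compat; lra).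
  destruct (bounded_sums_tail _ Hnx (ex_intro _ Bx HBx) e1 He1) as [Kx HKx].
  destruct (bounded_sums_tail _ Hny (ex_intro _ By HBy) e1 He1) as [Ky HKy].
  set (K := max Kx Ky). exists (K * K)%nat. intros M HM.
  assert (Htx : rsum (seq 1 M) (tail_after K (fun n => Cnorm (x n))) <= e1).
  { left. eapply Rle_lt_trans; [| apply (HKx M)]. apply rsum_le. intros; apply tail_after_mono; auto; lia. }
  assert (Hty : rsum (seq 1 M) (tail_after K (fun n => Cnorm (y n))) <= e1).
  { left. eapply Rle_lt_trans; [| apply (HKy M)]. apply rsum_le. intros; apply tail_after_mono; auto; lia. }
  eapply Rle_lt_trans; [apply (hyperbola_error x y K M); lia |].
  pose proof (rsum_nonneg (seq 1 M) _ (fun d _ => tail_after_nonneg _ K d Hnx)).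
  pose proof (rsum_nonneg (seq 1 M) _ (fun d _ => tail_after_nonneg _ K d Hny)).
  pose proof (HBx M). pose proof (HBy M).
  pose proof (rsum_nonneg (seq 1 M) _ (fun d _ => Hnx d)).
  pose proof (rsum_nonneg (seq 1 M) _ (fun d _ => Hny d)).
  apply Rle_lt_trans with (e1 * By + Bx * e1); [apply Rplus_le_compat; apply Rmult_le_compat; auto |].
  assert (e1 * (Bx + By + 1) = eps) by (unfold e1; field; lra). nra.
Qed.

Lemma psum_product_close x y la lb :
  bounded_sums (fun n => Cnorm (x n)) -> series_to x la -> series_to y lb ->
  forall eps, eps > 0 -> exists N, forall M, (N <= M)%nat ->
    Cnorm (Csub (Cmul (psum x M) (psum y M)) (Cmul la lb)) < eps.
Proof.
  intros [Bx HBx] Hla Hlb eps He.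
  assert (HBx0 : 0 <= Bx) by (specialize (HBx 0%nat); exact HBx). pose proof (Cnorm_nonneg lb).
  set (e1 := eps / (Bx + Cnorm lb + 1)). assert (He1 : e1 > 0) by (apply Rdiv_lt_0_compat; lra).
  destruct (Hla e1 He1) as [Na HNa]. destruct (Hlb e1 He1) as [Nb HNb].
  exists (max Na Nb). intros M HM. specialize (HNa M ltac:(lia)). specialize (HNb M ltac:(lia)).
  set (Sx := psum x M) in *. set (Sy := psum y M) in *.
  replace (Csub (Cmul Sx Sy) (Cmul la lb))
    with (Cadd (Cmul Sx (Csub Sy lb)) (Cmul lb (Csub Sx la))) by cring.
  eapply Rle_lt_trans; [apply Cnorm_triangle |]. rewrite !Cnorm_mul.
  assert (Cnorm Sx <= Bx) by (eapply Rle_trans; [apply csum_norm | apply HBx]).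
  pose proof (Cnorm_nonneg Sx). pose proof (Cnorm_nonneg (Csub Sy lb)). pose proof (Cnorm_nonneg (Csub Sx la)).
  apply Rle_lt_trans with (Bx * e1 + Cnorm lb * e1); [apply Rplus_le_compat; apply Rmult_le_compat; lra |].
  assert (e1 * (Bx + Cnorm lb + 1) = eps) by (unfold e1; field; lra). nra.
Qed.

Theorem dirichlet_product a b s la lb :
  bounded_sums (fun n => Cnorm (dir_term a s n)) -> bounded_sums (fun n => Cnorm (dir_term b s n)) ->
  series_to (dir_term a s) la -> series_to (dir_term b s) lb ->
  bounded_sums (fun n => Cnorm (dir_term (dconv a b) s n)) /\
  series_to (dir_term (dconv a b) s) (Cmul la lb).
Proof.
  intros Ha Hb Hla Hlb. split.
  { destruct Ha as [Bx HBx], Hb as [By HBy]. exists (Bx * By). apply dconv_bounded; auto. }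
  intros eps He.
  destruct (hyperbola_sum_close _ _ Ha Hb (eps / 2)) as [N1 HN1]; [lra |].
  destruct (psum_product_close _ _ _ _ Ha Hla Hlb (eps / 2)) as [N2 HN2]; [lra |].
  exists (max N1 N2). intros M HM. rewrite psum_dconv.
  specialize (HN1 M ltac:(lia)). specialize (HN2 M ltac:(lia)).
  set (P := Cmul (psum (dir_term a s) M) (psum (dir_term b s) M)) in *.
  replace (Csub (hyperbola_sum (dir_term a s) (dir_term b s) M) (Cmul la lb))
    with (Cadd (Csub (hyperbola_sum (dir_term a s) (dir_term b s) M) P) (Csub P (Cmul la lb))) by cring.
  eapply Rle_lt_trans; [apply Cnorm_triangle | lra].
Qed.

(** ** Absolute convergence of [sum log^j(n) n^{-sigma}] for [sigma > 1] *)

Lemma exp_le x y : x <= y -> exp x <= exp y.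
Proof. intros [H|H]; [left; apply exp_increasing; auto | subst; lra]. Qed.

Lemma ln_le_sub1 x : 0 < x -> ln x <= x - 1.
Proof. intros H. pose proof (exp_ineq1_le (ln x)). rewrite exp_ln in H0 by auto. lra. Qed.

Lemma exp_pow_nat x j : exp x ^ j = exp (INR j * x).
Proof.
  induction j. { simpl. rewrite Rmult_0_l, exp_0; auto. }
  rewrite S_INR. simpl. rewrite IHj, <- exp_plus. f_equal; ring.
Qed.

Lemma ln_INR_nonneg n : (1 <= n)%nat -> 0 <= ln (INR n).
Proof.
  intros Hn. apply (le_INR 1) in Hn. simpl in Hn. destruct Hn as [H|H].
  - left. rewrite <- ln_1. apply ln_increasing; lra.
  - rewrite <- H, ln_1. lra.
Qed.

(** Integral comparison for one term:
    [a n^{-(a+1)} <= (n-1)^{-a} - n^{-a}]. *)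
Lemma pseries_step a n : 0 < a -> (2 <= n)%nat ->
  a * exp (- (a + 1) * ln (INR n)) <= exp (- a * ln (INR n - 1)) - exp (- a * ln (INR n)).
Proof.
  intros Ha Hn.
  assert (Hn2 : 2 <= INR n) by (apply (le_INR 2); auto).
  set (L := ln (INR n)). set (L1 := ln (INR n - 1)).
  assert (HL : L - L1 >= / INR n).
  { unfold L, L1.
    assert (Hpos : 0 < (INR n - 1) * / INR n)
      by (apply Rmult_lt_0_compat; [lra | apply Rinv_0_lt_compat; lra]).
    pose proof (ln_le_sub1 _ Hpos) as H.
    rewrite ln_mult, ln_Rinv in H by (try apply Rinv_0_lt_compat; lra).
    assert ((INR n - 1) * / INR n - 1 = - / INR n) by (field; lra). lra. }
  replace (exp (- a * L1)) with (exp (- a * L) * exp (a * (L - L1)))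
    by (rewrite <- exp_plus; f_equal; ring).
  pose proof (exp_ineq1_le (a * (L - L1))).
  replace (exp (- (a + 1) * L)) with (exp (- a * L) * / INR n).
  2:{ replace (- (a + 1) * L) with (- a * L + - L) by ring. rewrite exp_plus, exp_Ropp.
      unfold L. rewrite exp_ln by lra. auto. }
  pose proof (exp_pos (- a * L)).
  assert (a * (L - L1) >= a * / INR n) by (apply Rmult_ge_compat_l; lra).
  nra.
Qed.

Lemma pseries_partial_bound p M : 1 < p -> (1 <= M)%nat ->
  rsum (seq 1 M) (fun n => exp (- p * ln (INR n))) <= 1 + (1 - exp (- (p - 1) * ln (INR M))) / (p - 1).
Proof.
  intros Hp HM. induction M; [lia |]. destruct M.
  - simpl. rewrite rsum_cons. unfold rsum; simpl. rewrite ln_1, !Rmult_0_r, exp_0.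
    replace ((1 - 1) / (p - 1)) with 0 by (field; lra). lra.
  - rewrite rsum_S. specialize (IHM ltac:(lia)).
    pose proof (pseries_step (p - 1) (S (S M)) ltac:(lra) ltac:(lia)) as H.
    replace (p - 1 + 1) with p in H by ring.
    replace (INR (S (S M)) - 1) with (INR (S M)) in H by (rewrite (S_INR (S M)); ring).
    assert (exp (- p * ln (INR (S (S M)))) <=
            (exp (- (p - 1) * ln (INR (S M))) - exp (- (p - 1) * ln (INR (S (S M))))) / (p - 1)).
    { apply (Rmult_le_reg_l (p - 1)); [lra |]. field_simplify; lra. }
    assert (1 + (1 - exp (- (p - 1) * ln (INR (S M)))) / (p - 1)
              + (exp (- (p - 1) * ln (INR (S M))) - exp (- (p - 1) * ln (INR (S (S M))))) / (p - 1)
            = 1 + (1 - exp (- (p - 1) * ln (INR (S (S M))))) / (p - 1)) by (field; lra).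
    lra.
Qed.

Lemma pseries_bounded p : 1 < p -> bounded_sums (fun n => exp (- p * ln (INR n))).
Proof.
  intros Hp. exists (1 + 1 / (p - 1)). intros M.
  assert (0 < 1 / (p - 1)) by (apply Rdiv_lt_0_compat; lra).
  destruct M; [unfold rsum; simpl; lra |].
  eapply Rle_trans; [apply pseries_partial_bound; auto; lia |].
  pose proof (exp_pos (- (p - 1) * ln (INR (S M)))).
  assert ((1 - exp (- (p - 1) * ln (INR (S M)))) / (p - 1) <= 1 / (p - 1)).
  { unfold Rdiv. apply Rmult_le_compat_r; [left; apply Rinv_0_lt_compat |]; lra. }
  lra.
Qed.

Lemma pow_le_exp (eps : R) (j : nat) : 0 < eps ->
  exists C, 0 <= C /\ forall L, 0 <= L -> L ^ j <= C * exp (eps * L).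
Proof.
  intros He. set (J := INR (S j)). assert (HJ : 0 < J) by (apply lt_0_INR; lia).
  assert (HJe : 0 < J / eps) by (apply Rdiv_lt_0_compat; lra).
  exists ((J / eps) ^ j). split; [apply pow_le; lra |].
  intros L HL. set (y := eps * L / J).
  assert (Hy : 0 <= y) by (unfold y; apply Rmult_le_pos; [nra | left; apply Rinv_0_lt_compat; lra]).
  assert (HLy : L = J / eps * y) by (unfold y; field; lra).
  rewrite HLy at 1. rewrite Rpow_mult_distr. apply Rmult_le_compat_l; [apply pow_le; lra |].
  assert (Hey : y <= exp y) by (pose proof (exp_ineq1_le y); lra).
  apply Rle_trans with (exp y ^ j); [apply pow_incr; lra |].
  rewrite exp_pow_nat. apply exp_le. unfold y.
  assert (INR j <= J) by (unfold J; rewrite S_INR; lra).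
  assert (0 <= eps * L) by nra.
  replace (INR j * (eps * L / J)) with ((INR j / J) * (eps * L)) by (field; lra).
  assert (INR j / J <= 1) by (apply (Rmult_le_reg_l J); auto; field_simplify; lra).
  assert (0 <= INR j / J) by (apply Rmult_le_pos; [apply pos_INR | left; apply Rinv_0_lt_compat; lra]).
  nra.
Qed.

Lemma log_pseries_bounded (sigma : R) (j : nat) : 1 < sigma ->
  bounded_sums (fun n => ln (INR n) ^ j * exp (- sigma * ln (INR n))).
Proof.
  intros Hs. destruct (pow_le_exp ((sigma - 1) / 2) j) as [C [HC HCb]]; [lra |].
  apply bounded_sums_le with (c := C) (g := fun n => exp (- ((sigma + 1) / 2) * ln (INR n))); auto.
  - intros n Hn. pose proof (ln_INR_nonneg n Hn) as H. specialize (HCb _ H).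
    pose proof (exp_pos (- sigma * ln (INR n))).
    eapply Rle_trans; [apply Rmult_le_compat_r; [lra | apply HCb] |].
    rewrite Rmult_assoc, <- exp_plus. right. do 2 f_equal. field.
  - apply pseries_bounded. lra.
Qed.

Lemma Cnorm_dir_term a s n : Cnorm (dir_term a s n) = Cnorm (a n) * exp (- fst s * ln (INR n)).
Proof.
  unfold dir_term, Cdiv. rewrite Cnorm_mul, Cnorm_inv by apply Cpow_nz. rewrite Cnorm_Cpow.
  f_equal. rewrite <- exp_Ropp. f_equal. ring.
Qed.

Lemma dir_term_bounded a s (c : R) (j : nat) : 1 < fst s -> 0 <= c ->
  (forall n, (1 <= n)%nat -> Cnorm (a n) <= c * ln (INR n) ^ j) ->
  bounded_sums (fun n => Cnorm (dir_term a s n)).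
Proof.
  intros Hs Hc H.
  apply bounded_sums_le with (c := c) (g := fun n => ln (INR n) ^ j * exp (- fst s * ln (INR n))); auto.
  - intros n Hn. rewrite Cnorm_dir_term, <- Rmult_assoc. apply Rmult_le_compat_r.
    + left; apply exp_pos.
    + apply H; auto.
  - apply log_pseries_bounded; auto.
Qed.

(** ** Termwise differentiation of the zeta series *)

(** Elementary Taylor bounds, all obtained from the mean value theorem. *)

Lemma mvt_bound (f f' : R -> R) x M :
  (forall c, derivable_pt_lim f c (f' c)) -> (forall c, Rabs c <= Rabs x -> Rabs (f' c) <= M) ->
  Rabs (f x - f 0) <= M * Rabs x.
Proof.
  intros Hd Hb. destruct (Rtotal_order x 0) as [Hx|[Hx|Hx]].
  - destruct (MVT_cor2 f f' x 0 Hx (fun c _ => Hd c)) as [c [Hc1 Hc2]].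
    replace (f x - f 0) with (- (f 0 - f x)) by ring. rewrite Rabs_Ropp, Hc1, Rabs_mult.
    replace (0 - x) with (- x) by ring. rewrite Rabs_Ropp.
    apply Rmult_le_compat_r; [apply Rabs_pos |]. apply Hb. rewrite !Rabs_left by lra. lra.
  - subst. replace (f 0 - f 0) with 0 by ring. rewrite Rabs_R0, Rmult_0_r. lra.
  - destruct (MVT_cor2 f f' 0 x Hx (fun c _ => Hd c)) as [c [Hc1 Hc2]].
    rewrite Hc1, Rabs_mult. replace (x - 0) with x by ring.
    apply Rmult_le_compat_r; [apply Rabs_pos |]. apply Hb.
    rewrite !Rabs_right by lra. lra.
Qed.

Lemma Rabs_sq x : x * x = Rabs x * Rabs x.
Proof. rewrite <- Rabs_mult. symmetry. apply Rabs_pos_eq. nra. Qed.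

Lemma exp_sub1_bound x : Rabs (exp x - 1) <= exp (Rabs x) * Rabs x.
Proof.
  replace (exp x - 1) with (exp x - exp 0) by (rewrite exp_0; ring).
  apply (mvt_bound exp exp x); [apply derivable_pt_lim_exp |].
  intros c Hc. rewrite Rabs_right by (left; apply exp_pos).
  apply exp_le. pose proof (Rle_abs c). lra.
Qed.

Lemma exp_sub2_bound x : Rabs (exp x - 1 - x) <= exp (Rabs x) * (x * x).
Proof.
  replace (exp x - 1 - x) with ((exp x - x) - (exp 0 - 0)) by (rewrite exp_0; ring).
  rewrite Rabs_sq, <- Rmult_assoc.
  apply (mvt_bound (fun t => exp t - t) (fun t => exp t - 1) x).
  - intros c. apply (derivable_pt_lim_minus exp id c (exp c) 1).
    + apply derivable_pt_lim_exp.
    + apply derivable_pt_lim_id.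
  - intros c Hc. eapply Rle_trans; [apply exp_sub1_bound |].
    apply Rmult_le_compat; auto; [left; apply exp_pos | apply Rabs_pos | apply exp_le; auto].
Qed.

Lemma sin_abs_bound x : Rabs (sin x) <= Rabs x.
Proof.
  replace (sin x) with (sin x - sin 0) by (rewrite sin_0; ring). rewrite <- (Rmult_1_l (Rabs x)).
  apply (mvt_bound sin cos x); [apply derivable_pt_lim_sin |]. intros. apply Rabs_le. apply COS_bound.
Qed.

Lemma cos_sub1_bound x : Rabs (cos x - 1) <= x * x.
Proof.
  replace (cos x - 1) with (cos x - cos 0) by (rewrite cos_0; ring). rewrite Rabs_sq.
  apply (mvt_bound cos (fun t => - sin t) x); [apply derivable_pt_lim_cos |].
  intros c Hc. rewrite Rabs_Ropp. eapply Rle_trans; [apply sin_abs_bound | auto].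
Qed.

Lemma sin_sub_bound x : Rabs (sin x - x) <= 2 * (x * x).
Proof.
  replace (sin x - x) with ((sin x - x) - (sin 0 - 0)) by (rewrite sin_0; ring).
  rewrite Rabs_sq, <- Rmult_assoc.
  apply (mvt_bound (fun t => sin t - t) (fun t => cos t - 1) x).
  - intros c. apply (derivable_pt_lim_minus sin id c (cos c) 1).
    + apply derivable_pt_lim_sin.
    + apply derivable_pt_lim_id.
  - intros c Hc. destruct (Rle_dec (Rabs x) 1).
    + eapply Rle_trans; [apply cos_sub1_bound |]. rewrite Rabs_sq.
      pose proof (Rabs_pos c). pose proof (Rabs_pos x). nra.
    + pose proof (COS_bound c). apply Rabs_le. split; lra.
Qed.

Definition exp_remainder (w : Cx) : Cx := Csub (Csub (Cexp w) Cx1) w.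

Lemma exp_remainder_bound w :
  Cnorm (exp_remainder w) <= 4 * exp (Rabs (fst w)) * (Cnorm w * Cnorm w).
Proof.
  destruct w as [a b]. rewrite Cnorm_sq. simpl. eapply Rle_trans; [apply Cnorm_le_sum |].
  unfold exp_remainder, Cexp, Csub, Cadd, Copp, Cx1; simpl.
  pose proof (exp_sub2_bound a). pose proof (exp_sub1_bound a). pose proof (cos_sub1_bound b).
  pose proof (sin_abs_bound b). pose proof (sin_sub_bound b).
  pose proof (exp_pos a). pose proof (exp_pos (Rabs a)).
  assert (exp a <= exp (Rabs a)) by (apply exp_le; apply Rle_abs).
  assert (1 <= exp (Rabs a)) by (rewrite <- exp_0; apply exp_le; apply Rabs_pos).
  assert (Hre : Rabs (exp a * cos b + - (1) + - a) <= exp (Rabs a) * (a * a) + exp (Rabs a) * (b * b)).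
  { replace (exp a * cos b + - (1) + - a) with ((exp a - 1 - a) + exp a * (cos b - 1)) by ring.
    eapply Rle_trans; [apply Rabs_triang |]. rewrite Rabs_mult, (Rabs_right (exp a)) by lra.
    apply Rplus_le_compat; auto. apply Rmult_le_compat; auto; try apply Rabs_pos; lra. }
  assert (Him : Rabs (exp a * sin b + - 0 + - b) <= exp (Rabs a) * Rabs a * Rabs b + 2 * (b * b)).
  { replace (exp a * sin b + - 0 + - b) with ((exp a - 1) * sin b + (sin b - b)) by ring.
    eapply Rle_trans; [apply Rabs_triang |]. rewrite Rabs_mult. apply Rplus_le_compat; auto.
    apply Rmult_le_compat; auto; apply Rabs_pos. }
  assert (Rabs a * Rabs b <= a * a + b * b).
  { pose proof (Rabs_pos a); pose proof (Rabs_pos b). rewrite (Rabs_sq a), (Rabs_sq b). nra. }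
  assert (exp (Rabs a) * Rabs a * Rabs b <= exp (Rabs a) * (a * a + b * b)).
  { rewrite Rmult_assoc. apply Rmult_le_compat_l; lra. }
  nra.
Qed.

(** [log_weight j n = (-log n)^j]; the Dirichlet series with these coefficients
    is the [j]-th derivative of zeta. *)
Definition log_weight (j : nat) (n : nat) : Cx := RtoC ((- ln (INR n)) ^ j).
Definition zeta_deriv_sum (j : nat) (z : Cx) : Cx :=
  Cseries_sum (fun i => dir_term (log_weight j) z (S i)).

Lemma Cnorm_log_weight j n : (1 <= n)%nat -> Cnorm (log_weight j n) = ln (INR n) ^ j.
Proof.
  intros. unfold log_weight. rewrite Cnorm_RtoC, <- RPow_abs, Rabs_Ropp, Rabs_pos_eq; auto.
  apply ln_INR_nonneg; auto.
Qed.

Lemma zeta_deriv_bounded j z : 1 < fst z -> bounded_sums (fun n => Cnorm (dir_term (log_weight j) z n)).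
Proof.
  intros. apply dir_term_bounded with (c := 1) (j := j); auto; try lra.
  intros. rewrite Cnorm_log_weight by auto. lra.
Qed.

Lemma zeta_deriv_series j z : 1 < fst z -> series_to (dir_term (log_weight j) z) (zeta_deriv_sum j z).
Proof.
  intros H. destruct (abs_summable_converges _ (zeta_deriv_bounded j z H)) as [l Hl].
  unfold zeta_deriv_sum. rewrite (Cseries_sum_spec _ _ Hl). auto.
Qed.

Lemma diff_quotient_term j z h n : h <> Cx0 ->
  Csub (Cmul (Csub (dir_term (log_weight j) (Cadd z h) n) (dir_term (log_weight j) z n)) (Cinv h))
       (dir_term (log_weight (S j)) z n)
  = Cmul (Cmul (log_weight j n) (Cinv (Cpow_pos (INR n) z)))
         (Cmul (exp_remainder (Cmul (RtoC (- ln (INR n))) h)) (Cinv h)).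
Proof.
  intros Hh. unfold dir_term, Cdiv, exp_remainder.
  rewrite Cpow_add, Cinv_mul, (Cinv_Cpow _ h) by apply Cpow_nz. unfold Cpow_pos at 2.
  replace (Cmul (RtoC (ln (INR n))) (Copp h)) with (Cmul (RtoC (- ln (INR n))) h) by cring.
  replace (log_weight (S j) n) with (Cmul (log_weight j n) (RtoC (- ln (INR n))))
    by (unfold log_weight; rewrite <- RtoC_mul; f_equal; simpl; ring).
  pose proof (Cmul_inv_r h Hh) as Hhi. set (hi := Cinv h) in *.
  transitivity (Cadd (Cmul (Cmul (log_weight j n) (Cinv (Cpow_pos (INR n) z)))
                           (Cmul (exp_remainder (Cmul (RtoC (- ln (INR n))) h)) hi))
                     (Cmul (Cmul (Cmul (log_weight j n) (Cinv (Cpow_pos (INR n) z))) (RtoC (- ln (INR n))))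
                           (Csub (Cmul h hi) Cx1))).
  - unfold exp_remainder. cring.
  - rewrite Hhi. unfold exp_remainder. cring.
Qed.

Lemma exp_remainder_scaled_bound L h d0 : 0 <= L -> h <> Cx0 -> Cnorm h <= d0 ->
  Cnorm (exp_remainder (Cmul (RtoC (- L)) h)) * / Cnorm h <= 4 * exp (L * d0) * (L * L) * Cnorm h.
Proof.
  intros HL Hh0 Hh. pose proof (Cnorm_pos h Hh0) as Hhp.
  set (w := Cmul (RtoC (- L)) h).
  assert (Hw : Cnorm w = L * Cnorm h) by (unfold w; rewrite Cnorm_mul, Cnorm_RtoC, Rabs_Ropp, Rabs_pos_eq; auto).
  assert (Hfw : exp (Rabs (fst w)) <= exp (L * d0)).
  { apply exp_le. unfold w, Cmul, RtoC; simpl. replace (- L * fst h - 0 * snd h) with (- L * fst h) by ring.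
    rewrite Rabs_mult, Rabs_Ropp, Rabs_pos_eq by auto. apply Rmult_le_compat_l; auto.
    pose proof (Cnorm_ge_fst h). lra. }
  assert (Cnorm (exp_remainder w) <= 4 * exp (L * d0) * (L * L) * Cnorm h * Cnorm h).
  { eapply Rle_trans; [apply exp_remainder_bound |]. rewrite Hw.
    replace (4 * exp (L * d0) * (L * L) * Cnorm h * Cnorm h)
      with (4 * exp (L * d0) * ((L * Cnorm h) * (L * Cnorm h))) by ring.
    pose proof (exp_pos (Rabs (fst w))). apply Rmult_le_compat_r; nra. }
  replace (4 * exp (L * d0) * (L * L) * Cnorm h)
    with ((4 * exp (L * d0) * (L * L) * Cnorm h * Cnorm h) * / Cnorm h) by (field; lra).
  apply Rmult_le_compat_r; [left; apply Rinv_0_lt_compat |]; auto.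
Qed.

Lemma diff_quotient_term_bound j z h n : (1 <= n)%nat -> h <> Cx0 ->
  Cnorm h < (fst z - 1) / 2 ->
  Cnorm (Csub (Cmul (Csub (dir_term (log_weight j) (Cadd z h) n) (dir_term (log_weight j) z n)) (Cinv h))
              (dir_term (log_weight (S j)) z n))
  <= 4 * Cnorm h * (ln (INR n) ^ (j + 2) * exp (- ((fst z + 1) / 2) * ln (INR n))).
Proof.
  intros Hn Hh0 Hh. set (sigma := fst z) in *. set (d0 := (sigma - 1) / 2) in *.
  rewrite diff_quotient_term by auto.
  rewrite !Cnorm_mul, Cnorm_log_weight, Cnorm_inv, (Cnorm_inv h), Cnorm_Cpow by (auto || apply Cpow_nz).
  fold sigma. set (L := ln (INR n)). assert (HL : 0 <= L) by (apply ln_INR_nonneg; lia).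
  pose proof (exp_remainder_scaled_bound L h d0 HL Hh0 ltac:(lra)) as HR.
  assert (Hee : exp (- (L * sigma)) * exp (L * d0) = exp (- ((sigma + 1) / 2) * L)).
  { rewrite <- exp_plus. f_equal. unfold d0. field. }
  rewrite <- exp_Ropp.
  assert (0 <= L ^ j) by (apply pow_le; auto). pose proof (exp_pos (- (L * sigma))).
  assert (0 <= Cnorm (exp_remainder (Cmul (RtoC (- L)) h)) * / Cnorm h)
    by (apply Rmult_le_pos; [apply Cnorm_nonneg | left; apply Rinv_0_lt_compat, Cnorm_pos; auto]).
  replace (L ^ (j + 2)) with (L ^ j * (L * L)) by (rewrite pow_add; simpl; ring).
  apply Rle_trans with (L ^ j * exp (- (L * sigma)) * (4 * exp (L * d0) * (L * L) * Cnorm h)).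
  - apply Rmult_le_compat_l; auto. apply Rmult_le_pos; lra.
  - right. rewrite <- Hee. ring.
Qed.

Lemma diff_quotient_series j z h : 1 < fst z -> 1 < fst (Cadd z h) ->
  series_to (fun n => Csub (Cmul (Csub (dir_term (log_weight j) (Cadd z h) n) (dir_term (log_weight j) z n)) (Cinv h))
                           (dir_term (log_weight (S j)) z n))
            (Csub (Cdiv (Csub (zeta_deriv_sum j (Cadd z h)) (zeta_deriv_sum j z)) h) (zeta_deriv_sum (S j) z)).
Proof.
  intros Hz Hzh. unfold Cdiv. unfold Csub at 1 2.
  apply series_to_add.
  - rewrite Cmul_comm.
    apply series_to_ext with (x := fun n => Cmul (Cinv h)
      (Cadd (dir_term (log_weight j) (Cadd z h) n) (Cmul (RtoC (-1)) (dir_term (log_weight j) z n))));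
      [intros; cring |].
    apply series_to_scal.
    replace (Csub (zeta_deriv_sum j (Cadd z h)) (zeta_deriv_sum j z))
      with (Cadd (zeta_deriv_sum j (Cadd z h)) (Cmul (RtoC (-1)) (zeta_deriv_sum j z))) by cring.
    apply series_to_add; [| apply series_to_scal]; apply zeta_deriv_series; auto.
  - replace (Copp (zeta_deriv_sum (S j) z)) with (Cmul (RtoC (-1)) (zeta_deriv_sum (S j) z)) by cring.
    apply series_to_ext with (x := fun n => Cmul (RtoC (-1)) (dir_term (log_weight (S j)) z n));
      [intros; cring |].
    apply series_to_scal. apply zeta_deriv_series; auto.
Qed.

Lemma zeta_deriv_sum_deriv j z : 1 < fst z ->
  Cderivable_lim (zeta_deriv_sum j) z (zeta_deriv_sum (S j) z).
Proof.
  intros Hz eps He. set (d0 := (fst z - 1) / 2).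
  destruct (log_pseries_bounded ((fst z + 1) / 2) (j + 2) ltac:(lra)) as [K HK].
  assert (HK0 : 0 <= K) by (specialize (HK 0%nat); exact HK).
  exists (Rmin d0 (eps / (4 * K + 1))). split.
  { apply Rmin_pos; [unfold d0; lra | apply Rdiv_lt_0_compat; lra]. }
  intros h Hh0 Hh.
  assert (Hhd0 : Cnorm h < d0) by (eapply Rlt_le_trans; [apply Hh | apply Rmin_l]).
  assert (Hhe : Cnorm h < eps / (4 * K + 1)) by (eapply Rlt_le_trans; [apply Hh | apply Rmin_r]).
  assert (Hzh : 1 < fst (Cadd z h)) by (pose proof (fst_add_lower z h d0 Hhd0); unfold d0 in *; lra).
  pose proof (Cnorm_nonneg h).
  eapply Rle_lt_trans.
  - apply (series_to_norm_bound _ _ (4 * Cnorm h * K) (diff_quotient_series j z h Hz Hzh)).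
    intros M. eapply Rle_trans.
    + apply rsum_le. intros n Hn. apply in_seq in Hn. apply diff_quotient_term_bound; auto; lia.
    + rewrite rsum_scal. apply Rmult_le_compat_l; [lra | apply HK].
  - assert (4 * Cnorm h * K <= 4 * K * (eps / (4 * K + 1))) by nra.
    assert (4 * K * (eps / (4 * K + 1)) < eps) by (apply (Rmult_lt_reg_r (4 * K + 1)); [lra | field_simplify; lra]).
    lra.
Qed.

(** Complex derivatives are unique, hence [Cderiv] computes them. *)
Lemma Cderivable_lim_unique f z l1 l2 :
  Cderivable_lim f z l1 -> Cderivable_lim f z l2 -> l1 = l2.
Proof.
  intros H1 H2. apply Cx_eq_of_close. intros e He.
  destruct (H1 e He) as [d1 [Hd1 HH1]]. destruct (H2 e He) as [d2 [Hd2 HH2]].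
  set (h := RtoC (Rmin d1 d2 / 2)).
  assert (Hm : 0 < Rmin d1 d2) by (apply Rmin_pos; lra).
  assert (Hh0 : h <> Cx0) by (unfold h, RtoC, Cx0; intros Hq; inversion Hq; lra).
  assert (Hhn : Cnorm h = Rmin d1 d2 / 2) by (unfold h; rewrite Cnorm_RtoC; apply Rabs_pos_eq; lra).
  exists (Cdiv (Csub (f (Cadd z h)) (f z)) h). split.
  - apply HH1; auto. rewrite Hhn. pose proof (Rmin_l d1 d2). lra.
  - apply HH2; auto. rewrite Hhn. pose proof (Rmin_r d1 d2). lra.
Qed.

Lemma Cderiv_spec f z l : Cderivable_lim f z l -> Cderiv f z = l.
Proof.
  intros H. unfold Cderiv. assert (Hex : exists l, Cderivable_lim f z l) by eauto.
  pose proof (epsilon_spec C_inhabited _ Hex). eapply Cderivable_lim_unique; eauto.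
Qed.

Lemma Cderivable_lim_local f g z l : (forall w, 1 < fst w -> f w = g w) -> 1 < fst z ->
  Cderivable_lim g z l -> Cderivable_lim f z l.
Proof.
  intros Hfg Hz H eps He. destruct (H eps He) as [d [Hd Hdd]].
  exists (Rmin d (fst z - 1)). split; [apply Rmin_pos; lra |].
  intros h Hh0 Hh. pose proof (Rmin_l d (fst z - 1)). pose proof (Rmin_r d (fst z - 1)).
  pose proof (fst_add_lower z h _ Hh).
  rewrite !Hfg by lra. apply Hdd; auto. lra.
Qed.

Lemma zeta_as_deriv_sum z : zeta z = zeta_deriv_sum 0 z.
Proof.
  unfold zeta, zeta_deriv_sum. f_equal. apply functional_extensionality. intros i.
  unfold dir_term, log_weight, Cdiv. symmetry. apply Cmul_1_l.
Qed.

Lemma Cderiv_n_zeta j z : 1 < fst z -> Cderiv_n j zeta z = zeta_deriv_sum j z.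
Proof.
  revert z. induction j; intros z Hz.
  - apply zeta_as_deriv_sum.
  - simpl. apply Cderiv_spec. apply Cderivable_lim_local with (g := zeta_deriv_sum j); auto.
    apply zeta_deriv_sum_deriv; auto.
Qed.

(** ** The Moebius function *)

Fixpoint min_factor_from (d fuel n : nat) : nat :=
  match fuel with
  | O => n
  | S fuel' => if Nat.eqb (n mod d) 0 then d else min_factor_from (S d) fuel' n
  end.
Definition min_factor (n : nat) : nat := min_factor_from 2 n n.

Definition is_min_factor (n r : nat) : Prop :=
  (2 <= r)%nat /\ Nat.divide r n /\ forall e, (2 <= e)%nat -> Nat.divide e n -> (r <= e)%nat.

Lemma min_factor_from_spec n : forall fuel d, (2 <= d)%nat -> (d <= n)%nat -> (n < d + fuel)%nat ->
  (forall e, (2 <= e < d)%nat -> ~ Nat.divide e n) -> is_min_factor n (min_factor_from d fuel n).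
Proof.
  induction fuel; intros d H2 Hdn Hf Hnd; [lia |].
  simpl. destruct (Nat.eqb (n mod d) 0) eqn:E.
  - apply Nat.eqb_eq, Nat.Lcm0.mod_divide in E. split; auto. split; auto.
    intros e He Hdiv. destruct (le_lt_dec d e); auto. exfalso. apply (Hnd e); auto.
  - apply Nat.eqb_neq in E. apply IHfuel; try lia.
    + assert (d <> n) by (intros ->; rewrite Nat.Div0.mod_same in E; lia). lia.
    + intros e He Hdiv. destruct (Nat.eq_dec e d).
      * subst. apply E. apply Nat.Lcm0.mod_divide; auto.
      * apply (Hnd e); auto; lia.
Qed.

Lemma min_factor_spec n : (2 <= n)%nat -> is_min_factor n (min_factor n).
Proof. intros. apply min_factor_from_spec; lia. Qed.

Lemma min_factor_unique x q : (1 <= x)%nat -> is_min_factor x q -> min_factor x = q.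
Proof.
  intros Hx [Hq [Hqx Hmin]].
  assert (2 <= x)%nat by (apply Nat.divide_pos_le in Hqx; lia).
  destruct (min_factor_spec x H) as [H1 [H2 H3]].
  specialize (Hmin _ H1 H2). specialize (H3 _ Hq Hqx). lia.
Qed.

Fixpoint mobius_fuel (fuel n : nat) : R :=
  match fuel with
  | O => 0
  | S fuel' => if Nat.eqb n 1 then 1 else if Nat.eqb n 0 then 0 else
               if Nat.eqb (n mod (min_factor n * min_factor n)) 0 then 0
               else - mobius_fuel fuel' (n / min_factor n)
  end.
Definition mobius (n : nat) : R := mobius_fuel n n.

Lemma mobius_fuel_enough : forall f1 f2 n, (n <= f1)%nat -> (n <= f2)%nat ->
  mobius_fuel f1 n = mobius_fuel f2 n.
Proof.
  induction f1; intros f2 n H1 H2.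
  - assert (n = 0)%nat by lia. subst. destruct f2; simpl; auto.
  - destruct f2; [assert (n = 0)%nat by lia; subst; auto |].
    simpl. destruct (Nat.eqb n 1) eqn:E1; auto. destruct (Nat.eqb n 0) eqn:E0; auto.
    destruct (Nat.eqb (n mod (min_factor n * min_factor n)) 0); auto. f_equal.
    apply Nat.eqb_neq in E1, E0. destruct (min_factor_spec n ltac:(lia)) as [Hp _].
    assert (n / min_factor n < n)%nat by (apply Nat.div_lt; lia). apply IHf1; lia.
Qed.

Lemma mobius_fuel_S fuel n : mobius_fuel (S fuel) n =
  if Nat.eqb n 1 then 1 else if Nat.eqb n 0 then 0 else
  if Nat.eqb (n mod (min_factor n * min_factor n)) 0 then 0
  else - mobius_fuel fuel (n / min_factor n).
Proof. reflexivity. Qed.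

Lemma mobius_eq n : (2 <= n)%nat -> mobius n =
  if Nat.eqb (n mod (min_factor n * min_factor n)) 0 then 0 else - mobius (n / min_factor n).
Proof.
  intros H. destruct n; [lia |]. unfold mobius at 1. rewrite mobius_fuel_S.
  replace (Nat.eqb (S n) 1) with false by (symmetry; apply Nat.eqb_neq; lia).
  replace (Nat.eqb (S n) 0) with false by (symmetry; apply Nat.eqb_neq; lia).
  destruct (S n mod (min_factor (S n) * min_factor (S n)) =? 0); auto. f_equal.
  unfold mobius. apply mobius_fuel_enough; [| lia].
  destruct (min_factor_spec (S n) H) as [Hp _].
  assert (S n / min_factor (S n) < S n)%nat by (apply Nat.div_lt; lia). lia.
Qed.

Lemma mobius_bound n : Rabs (mobius n) <= 1.
Proof.
  unfold mobius. generalize n at 2. induction n as [|f IH]; intros m; simpl.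
  { rewrite Rabs_R0; lra. }
  destruct (Nat.eqb m 1); [rewrite Rabs_R1; lra |]. destruct (Nat.eqb m 0); [rewrite Rabs_R0; lra |].
  destruct (Nat.eqb _ 0); [rewrite Rabs_R0; lra |]. rewrite Rabs_Ropp. auto.
Qed.

Section MinFactor.
Variables (n p : nat).
Hypothesis (Hn : (2 <= n)%nat) (Hp : p = min_factor n).

Lemma min_factor_coprime d : Nat.divide d n -> ~ Nat.divide p d -> Nat.gcd p d = 1%nat.
Proof.
  intros Hd Hpd. destruct (min_factor_spec n Hn) as [H1 [H2 H3]]. rewrite <- Hp in *.
  set (g := Nat.gcd p d).
  assert (Hgp : Nat.divide g p) by apply Nat.gcd_divide_l.
  assert (Hgd : Nat.divide g d) by apply Nat.gcd_divide_r.
  assert (g <> 0)%nat by (intros E; apply Nat.gcd_eq_0_l in E; lia).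
  destruct (le_lt_dec 2 g); [| lia]. exfalso.
  assert (p <= g)%nat by (apply H3; auto; eapply Nat.divide_trans; eauto).
  assert (g <= p)%nat by (apply Nat.divide_pos_le; auto; lia).
  apply Hpd. replace p with g by lia. auto.
Qed.

Lemma min_factor_mul_dvd d : Nat.divide d n -> ~ Nat.divide p d -> Nat.divide (p * d) n.
Proof.
  intros Hd Hpd. pose proof (min_factor_coprime d Hd Hpd) as Hg.
  destruct (min_factor_spec n Hn) as [H1 [H2 H3]]. rewrite <- Hp in *.
  destruct Hd as [k Hk]. subst n.
  assert (Nat.divide p k) by (apply Nat.gauss with d; [rewrite Nat.mul_comm |]; auto).
  destruct H as [k' Hk']. subst k. exists k'. ring.
Qed.

Lemma min_factor_of_divisor x : Nat.divide x n -> (1 <= x)%nat -> Nat.divide p x -> min_factor x = p.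
Proof.
  intros Hx Hx1 Hpx. destruct (min_factor_spec n Hn) as [H1 [H2 H3]]. rewrite <- Hp in *.
  apply min_factor_unique; auto. repeat split; auto.
  intros e He Hex. apply H3; auto. eapply Nat.divide_trans; eauto.
Qed.

Lemma mobius_mul_min_factor d : Nat.divide d n -> ~ Nat.divide p d -> (1 <= d)%nat ->
  mobius (p * d) = - mobius d.
Proof.
  intros Hd Hpd Hd1. pose proof (min_factor_mul_dvd d Hd Hpd) as Hm.
  destruct (min_factor_spec n Hn) as [H1 _]. rewrite <- Hp in H1.
  assert (Hl : min_factor (p * d) = p) by (apply min_factor_of_divisor; auto; [nia | exists d; ring]).
  rewrite mobius_eq, Hl by nia.
  destruct (Nat.eqb ((p * d) mod (p * p)) 0) eqn:E.
  - apply Nat.eqb_eq, Nat.Lcm0.mod_divide in E. exfalso. apply Hpd.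
    apply Nat.mul_divide_cancel_l in E; auto. lia.
  - do 2 f_equal. rewrite Nat.mul_comm. apply Nat.div_mul. lia.
Qed.

Lemma mobius_square_min_factor d : Nat.divide d n -> Nat.divide (p * p) d -> (1 <= d)%nat ->
  mobius d = 0.
Proof.
  intros Hd Hpp Hd1. destruct (min_factor_spec n Hn) as [H1 _]. rewrite <- Hp in H1.
  assert (Hl : min_factor d = p).
  { apply min_factor_of_divisor; auto. eapply Nat.divide_trans; [| apply Hpp]. exists p. ring. }
  assert (2 <= d)%nat by (apply Nat.divide_pos_le in Hpp; nia).
  rewrite mobius_eq, Hl by auto. replace (Nat.eqb (d mod (p * p)) 0) with true; auto.
  symmetry. apply Nat.eqb_eq, Nat.Lcm0.mod_divide; auto.
Qed.

Definition p_free (d : nat) : Prop := Nat.divide d n /\ ~ Nat.divide p d.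

Lemma csum_p_multiples (f : nat -> Cx) :
  csum (seq 1 n) (fun d' => if xm (p_free d') then f (p * d')%nat else Cx0) =
  csum (seq 1 n) (fun d => if xm (Nat.divide p d /\ p_free (d / p)%nat) then f d else Cx0).
Proof.
  destruct (min_factor_spec n Hn) as [Hp2 _]. rewrite <- Hp in Hp2.
  set (F := fun (_ e : nat) => if xm (p_free e) then f (p * e)%nat else Cx0).
  rewrite (csum_ext (seq 1 n) _
        (fun d' => csum (seq 1 n) (fun d => if Nat.eq_dec d (p * d') then F p d' else Cx0))).
  - rewrite csum_swap. apply csum_ext. intros d Hd. apply in_seq in Hd.
    rewrite (csum_ext _ _ (fun d' => if Nat.eq_dec (p * d') d then F p d' else Cx0))
      by (intros d' _; destruct (Nat.eq_dec d (p * d')); destruct (Nat.eq_dec (p * d') d); auto; lia).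
    rewrite (csum_factor_fiber F n d p) by lia. unfold F.
    destruct (xm (Nat.divide p d)) as [[k Hk]|Hpd].
    + subst d. rewrite Nat.div_mul by lia. replace (p * k)%nat with (k * p)%nat by ring.
      destruct (xm (Nat.divide p (k * p) /\ p_free k)) as [[_ Hc]|Hc]; destruct (xm (p_free k)); try tauto.
      exfalso. apply Hc. split; auto. exists k; auto.
    + destruct (xm (Nat.divide p d /\ p_free (d / p)%nat)) as [[H _]|]; tauto.
  - intros d' Hd'. apply in_seq in Hd'. rewrite csum_single. unfold F.
    destruct (xm (p_free d')) as [[Hdn Hpd]|]; destruct (xm _); auto.
    pose proof (min_factor_mul_dvd d' Hdn Hpd) as Hm. apply Nat.divide_pos_le in Hm; lia.
Qed.

(** Every divisor of [n] is [p]-free, or [p] times a [p]-free divisor, or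
    divisible by [p^2]; these cases are exclusive. *)
Lemma divisor_cases (f : nat -> Cx) d : (1 <= d)%nat ->
  (forall d, Nat.divide d n -> Nat.divide (p * p) d -> (1 <= d)%nat -> f d = Cx0) ->
  (if xm (Nat.divide d n) then f d else Cx0) =
  Cadd (if xm (p_free d) then f d else Cx0)
       (if xm (Nat.divide p d /\ p_free (d / p)%nat) then f d else Cx0).
Proof.
  intros Hd Hf. destruct (min_factor_spec n Hn) as [Hp2 _]. rewrite <- Hp in Hp2.
  destruct (xm (p_free d)) as [Hc|Hc]; destruct (xm (Nat.divide p d /\ p_free (d / p)%nat)) as [Hb|Hb];
    destruct (xm (Nat.divide d n)) as [Hdn|Hdn]; unfold p_free in *; try cring; try tauto.
  - exfalso. destruct Hb as [[k Hk] Hk2]. apply Hdn. subst d. rewrite Nat.div_mul in Hk2 by lia.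
    destruct Hk2 as [Hk2 Hk3]. rewrite Nat.mul_comm. apply min_factor_mul_dvd; auto.
  - (* [p] divides [d] but [d / p] is not [p]-free: then [p^2 | d] *)
    destruct (xm (Nat.divide p d)) as [[k Hk]|Hpd]; [| exfalso; apply Hc; split; auto].
    assert (Hkn : Nat.divide k n)
      by (apply (Nat.divide_trans k d n); [rewrite Hk; apply Nat.divide_factor_l | exact Hdn]).
    destruct (xm (Nat.divide p k)) as [[q Hq]|Hpk].
    + rewrite Hf; [cring | exact Hdn | exists q; subst; ring | lia].
    + exfalso. apply Hb. split; [exists k; auto |]. rewrite Hk, Nat.div_mul by lia. split; auto.
Qed.

Lemma divisor_sum_min_factor (f : nat -> Cx) :
  (forall d, Nat.divide d n -> Nat.divide (p * p) d -> (1 <= d)%nat -> f d = Cx0) ->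
  csum (seq 1 n) (fun d => if xm (Nat.divide d n) then f d else Cx0) =
  csum (seq 1 n) (fun d => if xm (p_free d) then Cadd (f d) (f (p * d)%nat) else Cx0).
Proof.
  intros Hf.
  rewrite (csum_ext _ (fun d => if xm (p_free d) then Cadd (f d) (f (p * d)%nat) else Cx0)
             (fun d => Cadd (if xm (p_free d) then f d else Cx0)
                            (if xm (p_free d) then f (p * d)%nat else Cx0)))
    by (intros; destruct (xm (p_free _)); cring).
  rewrite csum_add, csum_p_multiples, <- csum_add. apply csum_ext.
  intros d Hd. apply in_seq in Hd. apply divisor_cases; auto. lia.
Qed.

End MinFactor.

Lemma mobius_divisor_sum n : (1 <= n)%nat ->
  csum (seq 1 n) (fun d => if xm (Nat.divide d n) then RtoC (mobius d) else Cx0) =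
  if Nat.eq_dec n 1 then Cx1 else Cx0.
Proof.
  intros Hn. destruct (Nat.eq_dec n 1) as [->|Hn1].
  { simpl. rewrite csum_cons. change (mobius 1) with 1. change (csum [] ?f) with Cx0.
    destruct (xm (Nat.divide 1 1)) as [_|H]; [cring |].
    exfalso; apply H, Nat.divide_1_l. }
  set (p := min_factor n).
  rewrite (divisor_sum_min_factor n p ltac:(lia) eq_refl)
    by (intros d Hd Hpd Hd1; rewrite (mobius_square_min_factor n p ltac:(lia) eq_refl d); auto).
  rewrite (csum_ext _ _ (fun _ => Cx0)); [apply csum_zero |].
  intros d Hd. apply in_seq in Hd. destruct (xm (p_free n p d)) as [[Hdn Hpd]|]; auto.
  rewrite (mobius_mul_min_factor n p ltac:(lia) eq_refl d) by (auto; lia). cring.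
Qed.

(** ** Generalized Ramanujan sums as a Dirichlet convolution *)

Module DivisorPowers.
Import ssreflect ssrfun ssrbool eqtype ssrnat div.
Local Open Scope nat_scope.

Lemma divide_dvdn x y : Nat.divide x y <-> is_true (dvdn x y).
Proof. split; [move=> [z ->]; apply/dvdnP; by exists z | move/dvdnP => [z ->]; by exists z]. Qed.

Lemma pow_expn a k : Nat.pow a k = expn a k.
Proof. elim: k => [|k IH] //=. by rewrite expnS IH. Qed.

Lemma divide_pow_cancel e q k : (1 <= k)%coq_nat ->
  Nat.divide (Nat.pow e k) (Nat.pow q k) -> Nat.divide e q.
Proof. move=> Hk. rewrite !pow_expn !divide_dvdn dvdn_pexp2r //. by apply/leP. Qed.

Lemma lcm_pow_dvdn k a b m : 0 < a -> 0 < b -> a ^ k %| m -> b ^ k %| m -> lcmn a b ^ k %| m.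
Proof.
  move=> a0 b0 ha hb. set g := gcdn a b.
  have g0 : 0 < g by rewrite gcdn_gt0 a0.
  set a' := a %/ g; set b' := b %/ g.
  have ea : a = a' * g by rewrite divnK // dvdn_gcdl.
  have eb : b = b' * g by rewrite divnK // dvdn_gcdr.
  have co : coprime (b' ^ k) (a' ^ k).
  { apply: coprimeXl; apply: coprimeXr.
    by rewrite /coprime -(eqn_pmul2r g0) mul1n muln_gcdl -ea -eb gcdnC. }
  have -> : lcmn a b = a' * b' * g.
  { apply/eqP; rewrite -(eqn_pmul2r g0) muln_lcm_gcd {1}ea {1}eb.
    by rewrite -!mulnA (mulnCA g). }
  move: ha hb; rewrite ea eb !expnMn => /dvdnP [u ->].
  rewrite mulnA dvdn_pmul2r ?expn_gt0 ?g0 // Gauss_dvdl // => /dvdnP [w ->].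
  by rewrite (mulnC (a' ^ k)) -!mulnA dvdn_mull.
Qed.

Lemma pow_divisors_lcm_closed a b h q k : (1 <= a)%coq_nat -> (1 <= b)%coq_nat ->
  Nat.divide (Nat.pow a k) h -> Nat.divide (Nat.pow b k) h -> Nat.divide a q -> Nat.divide b q ->
  exists L, Nat.divide a L /\ Nat.divide b L /\ Nat.divide L q /\ Nat.divide (Nat.pow L k) h.
Proof.
  move=> /leP a1 /leP b1. rewrite !pow_expn !divide_dvdn => ha hb aq bq.
  exists (lcmn a b). rewrite pow_expn !divide_dvdn dvdn_lcml dvdn_lcmr dvdn_lcm aq bq.
  by rewrite lcm_pow_dvdn.
Qed.
End DivisorPowers.

Lemma pow_pos_nat a k : (1 <= a)%nat -> (1 <= Nat.pow a k)%nat.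
Proof. intros. induction k; simpl; nia. Qed.

Lemma pow_divide_mono d D k : Nat.divide d D -> Nat.divide (Nat.pow d k) (Nat.pow D k).
Proof. intros [c ->]. exists (Nat.pow c k). apply Nat.pow_mul_l. Qed.

Lemma max_witness (P : nat -> Prop) : forall b, (forall x, P x -> (x <= b)%nat) -> P 1%nat ->
  exists D, P D /\ forall x, P x -> (x <= D)%nat.
Proof.
  induction b; intros Hb H1; [specialize (Hb _ H1); lia |].
  destruct (classic (P (S b))) as [HP|HP]; [exists (S b); split; auto |].
  apply IHb; auto. intros x Hx. specialize (Hb x Hx).
  destruct (Nat.eq_dec x (S b)); [subst; tauto | lia].
Qed.

Lemma pow_divisors_of_max k q h : (1 <= q)%nat ->
  exists D, (1 <= D)%nat /\ Nat.divide D q /\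
    (forall d, (1 <= d)%nat -> (Nat.divide d q /\ Nat.divide (Nat.pow d k) h) <-> Nat.divide d D).
Proof.
  intros Hq.
  set (P := fun x => (1 <= x)%nat /\ Nat.divide x q /\ Nat.divide (Nat.pow x k) h).
  destruct (max_witness P q) as [D [[HD1 [HDq HDh]] HDmax]].
  { intros x [Hx [Hxq _]]. apply Nat.divide_pos_le; auto; lia. }
  { repeat split; [lia | apply Nat.divide_1_l |]. rewrite Nat.pow_1_l. apply Nat.divide_1_l. }
  exists D. split; [auto |]. split; [auto |]. intros d Hd. split.
  - intros [Hdq Hdh].
    destruct (DivisorPowers.pow_divisors_lcm_closed d D h q k Hd HD1 Hdh HDh Hdq HDq)
      as [L [HdL [HDL [HLq HLh]]]].
    assert (HL1 : (1 <= L)%nat) by (destruct L; [destruct HLq as [c Hc]; lia | lia]).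
    assert (L <= D)%nat by (apply HDmax; split; auto).
    assert (D <= L)%nat by (apply Nat.divide_pos_le; auto; lia).
    replace D with L by lia. auto.
  - intros HdD. split; [eapply Nat.divide_trans; eauto |].
    eapply Nat.divide_trans; [| apply HDh]. apply pow_divide_mono; auto.
Qed.

Lemma beta_coprime_iff k q h D : (1 <= k)%nat -> (1 <= D)%nat -> Nat.divide D q ->
  (forall d, (1 <= d)%nat -> (Nat.divide d q /\ Nat.divide (Nat.pow d k) h) <-> Nat.divide d D) ->
  (beta_coprime k h (Nat.pow q k) <-> D = 1%nat).
Proof.
  intros Hk HD HDq Hiff. split.
  - intros Hb. destruct (Nat.eq_dec D 1); auto. exfalso. apply (Hb D); [lia |].
    destruct (proj2 (Hiff D HD) (Nat.divide_refl D)) as [_ H2].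
    split; auto. apply pow_divide_mono; auto.
  - intros -> e He [Heh Heq]. apply DivisorPowers.divide_pow_cancel in Heq; auto.
    destruct (Hiff e ltac:(lia)) as [H _]. specialize (H (conj Heq Heh)).
    apply Nat.divide_pos_le in H; lia.
Qed.

(** Moebius inversion of the [beta]-coprimality condition:
    [[h, q^k are k-coprime] = sum_{d | q, d^k | h} mobius d]. *)
Lemma beta_coprime_indicator k q h : (1 <= k)%nat -> (1 <= q)%nat ->
  (if xm (beta_coprime k h (Nat.pow q k)) then Cx1 else Cx0) =
  csum (seq 1 q) (fun d =>
    if xm (Nat.divide d q /\ Nat.divide (Nat.pow d k) h) then RtoC (mobius d) else Cx0).
Proof.
  intros Hk Hq. destruct (pow_divisors_of_max k q h Hq) as [D [HD [HDq Hiff]]].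
  rewrite (csum_ext _ _ (fun d => if xm (Nat.divide d D) then RtoC (mobius d) else Cx0)).
  2:{ intros d Hd. apply in_seq in Hd. specialize (Hiff d ltac:(lia)).
      destruct (xm (Nat.divide d q /\ _)); destruct (xm (Nat.divide d D)); tauto. }
  assert (D <= q)%nat by (apply Nat.divide_pos_le; auto; lia).
  rewrite (csum_seq_trunc 1 q D) by (auto; intros d Hd; destruct (xm _) as [Hdd|]; auto;
                                       apply Nat.divide_pos_le in Hdd; lia).
  rewrite mobius_divisor_sum by auto.
  pose proof (beta_coprime_iff k q h D Hk HD HDq Hiff).
  destruct (xm (beta_coprime k h (Nat.pow q k))); destruct (Nat.eq_dec D 1); tauto.
Qed.

Lemma multiples_sum a b (F : nat -> Cx) : (1 <= a)%nat ->
  csum (seq 0 (a * b)) (fun h => if xm (Nat.divide a h) then F h else Cx0) =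
  csum (seq 0 b) (fun j => F (a * j)%nat).
Proof.
  intros Ha. induction b; [rewrite Nat.mul_0_r; reflexivity |].
  replace (a * S b)%nat with (a * b + a)%nat by ring. rewrite seq_app, csum_app, IHb, seq_S, csum_app.
  f_equal. rewrite !Nat.add_0_l. destruct a; [lia |].
  change (seq (S a * b) (S a)) with (S a * b :: seq (S (S a * b)) a)%nat. rewrite !csum_cons.
  destruct (xm (Nat.divide (S a) (S a * b))) as [_|Hn]; [| exfalso; apply Hn; exists b; ring].
  rewrite (csum_ext (seq (S (S a * b)) a) _ (fun _ => Cx0)), csum_zero; [reflexivity |].
  intros x Hx. apply in_seq in Hx. destruct (xm (Nat.divide (S a) x)) as [Hd|]; auto. exfalso.
  replace x with (S a * b + (x - S a * b))%nat in Hd by lia.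
  apply Nat.divide_add_cancel_r in Hd; [| exists b; ring].
  apply Nat.divide_pos_le in Hd; lia.
Qed.

Definition root_unity (m N j : nat) : Cx := Cexp (0, 2 * PI * INR m * INR j / INR N).

Lemma csum_const_one N : csum (seq 0 N) (fun _ => Cx1) = RtoC (INR N).
Proof.
  induction N; [reflexivity |]. rewrite seq_S, csum_app, IHN, S_INR.
  unfold csum; simpl. unfold RtoC, Cadd, Cx1, Cx0; simpl. f_equal; ring.
Qed.

Lemma csum_cyclic_shift (f : nat -> Cx) N : f N = f 0%nat ->
  csum (seq 0 N) (fun j => f (S j)) = csum (seq 0 N) f.
Proof.
  intros Hper. rewrite <- csum_shift. destruct N; [reflexivity |].
  rewrite seq_S, csum_app. simpl seq at 2. rewrite csum_cons. unfold csum at 2; simpl.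
  change (f (1 + N)%nat) with (f (S N)). rewrite Hper, Cadd_0_r.
  simpl seq. rewrite csum_cons. cring.
Qed.

Lemma root_unity_ne_one m N : (1 <= N)%nat -> ~ Nat.divide N m ->
  Cexp (0, 2 * PI * INR m / INR N) <> Cx1.
Proof.
  intros HN Hnd Hw. apply Hnd. assert (HNp : 0 < INR N) by (apply lt_0_INR; lia).
  unfold Cexp, Cx1 in Hw. simpl in Hw. rewrite exp_0 in Hw.
  pose proof (f_equal fst Hw) as Hc. pose proof (f_equal snd Hw) as Hs. simpl in Hc, Hs.
  rewrite Rmult_1_l in Hc, Hs.
  pose proof (Nat.div_mod m N ltac:(lia)) as Hdm. set (c := (m / N)%nat) in *. set (r := (m mod N)%nat) in *.
  pose proof (Nat.mod_bound_pos m N ltac:(lia) ltac:(lia)) as Hr. fold r in Hr.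
  destruct (Nat.eq_dec r 0) as [Hr0|Hr0]; [exists c; lia | exfalso].
  assert (Hang : 2 * PI * INR m / INR N = 2 * PI * INR r / INR N + 2 * INR c * PI)
    by (rewrite Hdm, plus_INR, mult_INR; field; lra).
  rewrite Hang, cos_period in Hc. rewrite Hang, sin_period in Hs.
  assert (Hr' : 0 < INR r < INR N) by (split; [apply lt_0_INR | apply lt_INR]; lia).
  assert (0 < 2 * PI * INR r / INR N < 2 * PI).
  { pose proof PI_RGT_0. split; [apply Rdiv_lt_0_compat; nra |].
    apply (Rmult_lt_reg_r (INR N)); auto. field_simplify; nra. }
  destruct (sin_eq_O_2PI_0 (2 * PI * INR r / INR N) ltac:(lra) ltac:(lra) Hs) as [E|[E|E]]; try lra.
  rewrite E, cos_PI in Hc. lra.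
Qed.

Lemma root_unity_sum N m : (1 <= N)%nat ->
  csum (seq 0 N) (root_unity m N) = if xm (Nat.divide N m) then RtoC (INR N) else Cx0.
Proof.
  intros HN. assert (HNp : 0 < INR N) by (apply lt_0_INR; lia).
  destruct (xm (Nat.divide N m)) as [[c Hc]|Hnd].
  - rewrite (csum_ext _ _ (fun _ => Cx1)); [apply csum_const_one |].
    intros j _. unfold root_unity, Cexp; simpl. rewrite exp_0.
    replace (2 * PI * INR m * INR j / INR N) with (0 + 2 * INR (c * j) * PI)
      by (subst m; rewrite !mult_INR; field; lra).
    rewrite cos_period, sin_period, cos_0, sin_0. unfold Cx1. f_equal; ring.
  - set (w := Cexp (0, 2 * PI * INR m / INR N)).
    assert (Hstep : forall j, root_unity m N (S j) = Cmul (root_unity m N j) w).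
    { intros j. unfold root_unity, w. rewrite <- Cexp_add. f_equal.
      unfold Cadd; cbn [fst snd]. rewrite S_INR. f_equal; [ring | field; lra]. }
    assert (Hper : root_unity m N N = root_unity m N 0).
    { unfold root_unity, Cexp. cbn [fst snd].
      replace (2 * PI * INR m * INR N / INR N) with (0 + 2 * INR m * PI) by (field; lra).
      rewrite cos_period, sin_period. change (INR 0) with 0.
      replace (2 * PI * INR m * 0 / INR N) with 0 by (field; lra). reflexivity. }
    set (total := csum (seq 0 N) (root_unity m N)).
    assert (HS : Cmul total (Csub w Cx1) = Cx0).
    { replace (Cmul total (Csub w Cx1)) with (Csub (Cmul w total) total) by cring.
      unfold total. rewrite <- csum_scal.
      rewrite (csum_ext _ _ (fun j => root_unity m N (S j))) by (intros; rewrite Hstep; apply Cmul_comm).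
      rewrite csum_cyclic_shift by auto. cring. }
    assert (Hw : Csub w Cx1 <> Cx0).
    { intros Hw1. apply (root_unity_ne_one m N HN Hnd).
      fold w. replace w with (Cadd (Csub w Cx1) Cx1) by cring. rewrite Hw1. cring. }
    rewrite Cmul_comm in HS. apply (Cmul_integral _ _ HS Hw).
Qed.

(** The coefficients [g(e) = e^k [e^k | m]] whose Dirichlet series is
    [sigma^(k)_{1 - s/k}(m)]. *)
Definition sigma_coeff (k m e : nat) : Cx :=
  if xm (Nat.divide (Nat.pow e k) m) then RtoC (INR (Nat.pow e k)) else Cx0.

Lemma ramanujan_divisor_term k q m d : (1 <= q)%nat -> Nat.divide d q -> (1 <= d)%nat ->
  csum (seq 0 (Nat.pow q k)) (fun h =>
    if xm (Nat.divide (Nat.pow d k) h) then root_unity m (Nat.pow q k) h else Cx0)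
  = sigma_coeff k m (q / d).
Proof.
  intros Hq [c Hc] Hd.
  assert (Hc1 : (1 <= c)%nat) by (destruct c; lia).
  assert (Hqd : (q / d)%nat = c) by (rewrite Hc; apply Nat.div_mul; lia).
  assert (HQ : Nat.pow q k = (Nat.pow d k * Nat.pow c k)%nat) by (rewrite Hc, Nat.pow_mul_l; ring).
  rewrite Hqd, HQ, multiples_sum by (apply pow_pos_nat; lia).
  rewrite (csum_ext _ _ (root_unity m (Nat.pow c k))).
  - rewrite root_unity_sum by (apply pow_pos_nat; auto). reflexivity.
  - intros j _. unfold root_unity. do 2 f_equal. rewrite !mult_INR.
    pose proof (lt_0_INR _ (pow_pos_nat d k ltac:(lia))).
    pose proof (lt_0_INR _ (pow_pos_nat c k ltac:(lia))).
    field. lra.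
Qed.

Lemma ramanujan_dconv k q m : (1 <= k)%nat -> (1 <= q)%nat ->
  ramanujan_beta k q m = dconv (fun d => RtoC (mobius d)) (sigma_coeff k m) q.
Proof.
  intros Hk Hq. unfold ramanujan_beta. cbv zeta. set (Q := Nat.pow q k).
  change (Csum_list (map ?f ?l)) with (csum l f).
  (* insert the Moebius expansion of the coprimality indicator and swap the sums *)
  rewrite (csum_ext _ _ (fun h => csum (seq 1 q) (fun d =>
      if xm (Nat.divide d q /\ Nat.divide (Nat.pow d k) h)
      then Cmul (RtoC (mobius d)) (root_unity m Q h) else Cx0))).
  2:{ intros h _. transitivity (Cmul (root_unity m Q h) (if xm (beta_coprime k h Q) then Cx1 else Cx0)).
      - unfold root_unity. destruct (xm (beta_coprime k h Q)); cring.
      - unfold Q. rewrite beta_coprime_indicator, <- csum_scal by auto. apply csum_ext. intros d _.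
        destruct (xm (Nat.divide d q /\ _)); cring. }
  rewrite csum_swap. unfold dconv. apply csum_ext. intros d Hd. apply in_seq in Hd.
  destruct (xm (Nat.divide d q)) as [Hdq|Hdq].
  - rewrite (csum_ext _ _ (fun h => Cmul (RtoC (mobius d))
               (if xm (Nat.divide (Nat.pow d k) h) then root_unity m Q h else Cx0)))
      by (intros h _; destruct (xm (Nat.divide d q /\ _)) as [[]|];
          destruct (xm (Nat.divide (Nat.pow d k) h)); try tauto; cring).
    rewrite csum_scal. unfold Q. rewrite ramanujan_divisor_term by (auto; lia). reflexivity.
  - rewrite (csum_ext _ _ (fun _ => Cx0)); [apply csum_zero |].
    intros h _. destruct (xm (Nat.divide d q /\ _)) as [[]|]; tauto.
Qed.

(** ** The three Dirichlet series and the theorem *)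

Lemma zeta_series s : 1 < fst s ->
  bounded_sums (fun n => Cnorm (dir_term (fun _ => Cx1) s n)) /\
  series_to (dir_term (fun _ => Cx1) s) (zeta s).
Proof.
  intros Hs. rewrite zeta_as_deriv_sum. split.
  - apply (zeta_deriv_bounded 0 s Hs).
  - apply (zeta_deriv_series 0 s Hs).
Qed.

Lemma dconv_mobius_one n : (1 <= n)%nat ->
  dconv (fun d => RtoC (mobius d)) (fun _ => Cx1) n = if Nat.eq_dec n 1 then Cx1 else Cx0.
Proof.
  intros Hn. rewrite <- mobius_divisor_sum by auto. unfold dconv. apply csum_ext. intros d _.
  destruct (xm (Nat.divide d n)); auto. apply Cmul_1_r.
Qed.

Lemma mobius_series s : 1 < fst s ->
  bounded_sums (fun n => Cnorm (dir_term (fun d => RtoC (mobius d)) s n)) /\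
  series_to (dir_term (fun d => RtoC (mobius d)) s) (Cinv (zeta s)).
Proof.
  intros Hs. set (muC := fun d => RtoC (mobius d)).
  assert (Hb : bounded_sums (fun n => Cnorm (dir_term muC s n))).
  { apply dir_term_bounded with (c := 1) (j := 0%nat); auto; try lra. intros n Hn.
    unfold muC. rewrite Cnorm_RtoC. pose proof (mobius_bound n). simpl. lra. }
  split; auto. destruct (abs_summable_converges _ Hb) as [Lmu HLmu].
  destruct (zeta_series s Hs) as [Hzb Hz].
  destruct (dirichlet_product muC (fun _ => Cx1) s Lmu (zeta s) Hb Hzb HLmu Hz) as [_ Hprod].
  (* the product series is [1 + 0 + 0 + ...] *)
  set (D := dir_term (dconv muC (fun _ => Cx1)) s).
  assert (Hone : series_to D (psum D 1)).
  { apply series_to_finite. intros n Hn. unfold D, dir_term. rewrite dconv_mobius_one by lia.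
    destruct (Nat.eq_dec n 1); [lia |]. apply Cmul_0_l. }
  assert (Hpsum : psum D 1 = Cx1).
  { unfold psum, D, dir_term. simpl. rewrite csum_cons, dconv_mobius_one by lia. simpl.
    change (INR 1) with 1. rewrite Cpow_1. unfold Cdiv.
    rewrite (Cinv_unique Cx1 Cx1) by cring. change (csum [] ?f) with Cx0. cring. }
  rewrite Hpsum in Hone.
  replace (Cinv (zeta s)) with Lmu; auto. symmetry. apply Cinv_unique.
  rewrite Cmul_comm. eapply series_to_unique; eauto.
Qed.

Lemma sigma_coeff_vanishes k m n : (1 <= k)%nat -> (1 <= m)%nat -> (m < n)%nat ->
  sigma_coeff k m n = Cx0.
Proof.
  intros Hk Hm Hn. unfold sigma_coeff. destruct (xm (Nat.divide (Nat.pow n k) m)) as [Hd|]; auto.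
  exfalso. apply Nat.divide_pos_le in Hd; [| lia].
  assert (n <= Nat.pow n k)%nat.
  { destruct k; [lia |]. simpl. pose proof (pow_pos_nat n k ltac:(lia)). nia. }
  lia.
Qed.

Lemma sigma_series k m s : (1 <= k)%nat -> (1 <= m)%nat ->
  bounded_sums (fun n => Cnorm (dir_term (sigma_coeff k m) s n)) /\
  series_to (dir_term (sigma_coeff k m) s) (sigma_beta k (Csub Cx1 (Cdiv s (RtoC (INR k)))) m).
Proof.
  intros Hk Hm.
  assert (Hvan : forall n, (m < n)%nat -> dir_term (sigma_coeff k m) s n = Cx0).
  { intros n Hn. unfold dir_term, Cdiv. rewrite sigma_coeff_vanishes by auto. apply Cmul_0_l. }
  split.
  { apply bounded_sums_finite with (K := m); [intros; apply Cnorm_nonneg |].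
    intros n Hn. rewrite Hvan by auto. apply Cnorm_0. }
  replace (sigma_beta k (Csub Cx1 (Cdiv s (RtoC (INR k)))) m) with (psum (dir_term (sigma_coeff k m) s) m);
    [apply series_to_finite; auto |].
  unfold sigma_beta, psum. change (Csum_list (map ?f ?l)) with (csum l f). apply csum_ext.
  intros d Hd. apply in_seq in Hd. unfold dir_term, sigma_coeff.
  destruct (xm (Nat.divide (Nat.pow d k) m)); [| unfold Cdiv; apply Cmul_0_l].
  assert (HdR : 0 < INR d) by (apply lt_0_INR; lia).
  assert (HkR : INR k <> 0) by (apply not_0_INR; lia).
  (* [d^k / d^s = d^{k (1 - s/k)}] *)
  replace (Cmul (RtoC (INR k)) (Csub Cx1 (Cdiv s (RtoC (INR k))))) with (Cadd (RtoC (INR k)) (Copp s)).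
  2:{ destruct s as [a b]. unfold Cdiv, Cmul, Cinv, Csub, Cadd, Copp, RtoC, Cx1; simpl. f_equal; field; auto. }
  rewrite Cpow_add, Cpow_real, <- Cinv_Cpow by auto. unfold Cdiv. do 2 f_equal.
  rewrite Rpower_pow, pow_INR by auto. auto.
Qed.

Lemma log_power_series k s : 1 < fst s ->
  bounded_sums (fun n => Cnorm (dir_term (fun e => RtoC (ln (INR e) ^ k)) s n)) /\
  series_to (dir_term (fun e => RtoC (ln (INR e) ^ k)) s) (Cmul (RtoC ((-1) ^ k)) (Cderiv_n k zeta s)).
Proof.
  intros Hs. split.
  - apply dir_term_bounded with (c := 1) (j := k); auto; try lra. intros n Hn.
    rewrite Cnorm_RtoC, Rabs_pos_eq; [lra |]. apply pow_le, ln_INR_nonneg; auto.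
  - rewrite Cderiv_n_zeta by auto.
    apply series_to_ext with (x := fun n => Cmul (RtoC ((-1) ^ k)) (dir_term (log_weight k) s n)).
    + intros n Hn. unfold dir_term, log_weight, Cdiv. rewrite Cmul_assoc, <- RtoC_mul.
      do 2 f_equal. rewrite <- Rpow_mult_distr. f_equal. ring.
    + apply series_to_scal. apply zeta_deriv_series. auto.
Qed.

Lemma ramanujan_series k m s : (1 <= k)%nat -> (1 <= m)%nat -> 1 < fst s ->
  bounded_sums (fun n => Cnorm (dir_term (fun q => ramanujan_beta k q m) s n)) /\
  series_to (dir_term (fun q => ramanujan_beta k q m) s)
            (Cmul (Cinv (zeta s)) (sigma_beta k (Csub Cx1 (Cdiv s (RtoC (INR k)))) m)).
Proof.
  intros Hk Hm Hs.
  destruct (mobius_series s Hs) as [Hmb Hms]. destruct (sigma_series k m s Hk Hm) as [Hgb Hgs].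
  destruct (dirichlet_product _ _ s _ _ Hmb Hgb Hms Hgs) as [Hb Hc].
  assert (Heq : forall n, (1 <= n)%nat ->
            dir_term (dconv (fun d => RtoC (mobius d)) (sigma_coeff k m)) s n =
            dir_term (fun q => ramanujan_beta k q m) s n)
    by (intros n Hn; unfold dir_term; rewrite ramanujan_dconv by auto; reflexivity).
  split; [eapply bounded_sums_ext; [| exact Hb] | eapply series_to_ext; [| exact Hc]];
    intros n Hn; cbv beta; rewrite Heq; auto.
Qed.

(** Lambda^(beta)_{k,m} = c * log^k, and the three series multiply. *)
Theorem mainTheorem8 (beta k m : nat) (s : Cx) :
  (1 <= beta)%nat -> (1 <= k)%nat -> (1 <= m)%nat -> Re s > 1 ->
  Cseries_abs_conv (fun i => dirichlet_term beta k m s (S i)) /\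
  Cseries_conv (fun i => dirichlet_term beta k m s (S i))
    (Cmul (RtoC ((-1) ^ k))
       (Cmul (sigma_beta beta (Csub Cx1 (Cdiv s (RtoC (INR beta)))) m)
             (Cdiv (Cderiv_n k zeta s) (zeta s)))).
Proof.
  intros Hb Hk Hm Hs. unfold Re in Hs.
  destruct (ramanujan_series beta m s Hb Hm ltac:(lra)) as [Hcb Hcs].
  destruct (log_power_series k s ltac:(lra)) as [Hlb Hls].
  destruct (dirichlet_product _ _ s _ _ Hcb Hlb Hcs Hls) as [HLb HLs].
  change (dir_term (dconv (fun q => ramanujan_beta beta q m) (fun e => RtoC (ln (INR e) ^ k))) s)
    with (dirichlet_term beta k m s) in HLb, HLs.
  split; [apply bounded_Cseries_abs_conv; auto |].
  apply series_to_Cseries_conv.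
  match goal with |- series_to _ ?l => replace l with
    (Cmul (Cmul (Cinv (zeta s)) (sigma_beta beta (Csub Cx1 (Cdiv s (RtoC (INR beta)))) m))
          (Cmul (RtoC ((-1) ^ k)) (Cderiv_n k zeta s))) by (unfold Cdiv; cring) end.
  exact HLs.
Qed.
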